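(* Let $p>1$ and $\gamma=\frac{p-2}{2(p-1)}$. For $\alpha>0$, let $\phi$ be the maximal solution, on $[0,R_{\max})$ with $R_{\max}=R_{\max}(\alpha)\in(0,\infty]$, of $$\phi''=\tfrac12 y\phi'-\gamma\phi-|\phi'|^p\ (y>0),\qquad \phi(0)=0,\quad \phi'(0)=\alpha.$$ There exists $\alpha_0>0$ such that for every $\alpha\in(0,\alpha_0)$: $R_{\max}=\infty$, $\phi>0$ and $\phi'>0$ on $(0,\infty)$, and there exists $\bar R>0$ such that $\phi''<0$ on $[0,\bar R)$ and $\phi''>0$ on $(\bar R,\infty)$. *)

From Stdlib Require Import Reals Lra.
From Coquelicot Require Import Coquelicot.
Open Scope R_scope.

(* |x|^p for real p > 0, with the convention 0^p = 0
   (Stdlib's Rpower 0 p would be exp (p * ln 0) = 1, which is wrong). *)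
Definition abspow (x p : R) : R :=
  if Req_EM_T x 0 then 0 else Rpower (Rabs x) p.

Definition gam (p : R) : R := (p - 2) / (2 * (p - 1)).

Definition ode_rhs (p : R) (phi dphi : R -> R) (y : R) : R :=
  / 2 * y * dphi y - gam p * phi y - abspow (dphi y) p.

Definition right_deriv (f : R -> R) (x l : R) : Prop :=
  filterlim (fun y => (f y - f x) / (y - x)) (at_right x) (locally l).

(* (phi, dphi) is a solution on [0, Rm) of the initial value problem
   phi'' = y/2 phi' - gamma phi - |phi'|^p (y > 0), phi(0) = 0, phi'(0) = alpha.
   dphi is the derivative phi'; derivatives at 0 are right derivatives,
   and phi'' is given by ode_rhs (including at 0, as a right derivative). *)
Definition is_sol (p alpha : R) (Rm : Rbar) (phi dphi : R -> R) : Prop :=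
  Rbar_lt 0 Rm /\
  phi 0 = 0 /\ dphi 0 = alpha /\
  right_deriv phi 0 (dphi 0) /\
  right_deriv dphi 0 (ode_rhs p phi dphi 0) /\
  (forall y, 0 < y -> Rbar_lt y Rm ->
     is_derive phi y (dphi y) /\ is_derive dphi y (ode_rhs p phi dphi y)).

Definition is_max_sol (p alpha : R) (Rm : Rbar) (phi dphi : R -> R) : Prop :=
  is_sol p alpha Rm phi dphi /\
  ~ (exists (R' : Rbar) (psi dpsi : R -> R),
        Rbar_lt Rm R' /\ is_sol p alpha R' psi dpsi /\
        (forall y, 0 <= y -> Rbar_lt y Rm -> psi y = phi y)).

From Stdlib Require Import Reals Lra Lia Classical.
From Coquelicot Require Import Coquelicot.
Open Scope R_scope.

(* Write [c = 1/(2(p-1)) = 1/2 - gamma] and [K = alpha^(p-1)].  Wherever [phi' > 0],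
   differentiating the equation gives [phi''' = c phi' + (y/2 - p phi'^(p-1)) phi''],
   and [phi''(0) = -alpha K < 0].  When [K] is small compared with [1] and [c], [phi'']
   cannot cross below [-2 alpha K] while it is negative (there [phi'''] would be
   positive), so [phi' >= alpha/2] and [phi'' >= -alpha K + (c alpha/4) y]: [phi''] vanishes
   at some [Rbar <= 8K/c <= 1].  At a zero of [phi''] we have [phi''' = c phi' > 0], so
   [phi''] never returns to [0]; hence [phi' >= alpha/2] and [phi >= alpha y/2] for all
   times.  A finite maximal time is impossible: [phi + phi'] grows at most exponentially,
   so [phi] and [phi'] have limits at the endpoint, and a local solution started there
   (Picard iteration for the equation with clamped velocity) extends the solution. *)

Lemma continuity_pt_eps f x : continuity_pt f x -> forall eps, 0 < eps ->
  exists d, 0 < d /\ forall y, Rabs (y - x) < d -> Rabs (f y - f x) < eps.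
Proof.
  intros H eps He. destruct (H eps He) as [d [Hd H']].
  exists d; split; [lra|]. intros y Hy.
  destruct (Req_dec y x) as [->|Hne].
  - rewrite Rminus_eq_0, Rabs_R0; lra.
  - apply (H' y). split; [split; [exact I| auto]| exact Hy].
Qed.

Lemma continuity_pt_of_eps f x : (forall eps, 0 < eps ->
  exists d, 0 < d /\ forall y, Rabs (y - x) < d -> Rabs (f y - f x) < eps) ->
  continuity_pt f x.
Proof.
  intros H eps He. destruct (H eps He) as [d [Hd H']].
  exists d; split; [lra|]. intros y [_ Hy]. apply H'. exact Hy.
Qed.

Lemma continuity_pt_of_is_derive f x l : is_derive f x l -> continuity_pt f x.
Proof.
  intros H. apply is_derive_Reals in H. apply derivable_continuous_pt. exists l. exact H.
Qed.

Lemma continuity_pt_cst (c x : R) : continuity_pt (fun _ => c) x.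
Proof. apply continuity_pt_const. intros ? ?; reflexivity. Qed.

Lemma locally_of_Rabs x r (P : R -> Prop) : 0 < r ->
  (forall y, Rabs (y - x) < r -> P y) -> locally x P.
Proof. intros hr H. exists (mkposreal r hr). intros y Hy. apply H. exact Hy. Qed.

Lemma Rabs_le_between s x0 r : Rabs (s - x0) <= r -> x0 - r <= s <= x0 + r.
Proof. unfold Rabs; destruct Rcase_abs; lra. Qed.

Lemma Rabs_sub_le_of_segment x0 t s : Rmin x0 t <= s <= Rmax x0 t ->
  Rabs (s - x0) <= Rabs (t - x0).
Proof.
  intros H. unfold Rmin, Rmax in H. destruct Rle_dec.
  - rewrite !Rabs_right; lra.
  - rewrite !Rabs_left1; lra.
Qed.

Lemma first_crossing f a b L : a < b -> (forall x, a <= x <= b -> continuity_pt f x) ->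
  L < f a -> f b <= L ->
  exists s, a < s <= b /\ f s = L /\ forall t, a <= t < s -> L < f t.
Proof.
  intros Hab Hc Ha Hb.
  set (E := fun x => a <= x <= b /\ forall t, a <= t <= x -> L < f t).
  assert (HB : bound E) by (exists b; intros x [Hx _]; lra).
  assert (HE : exists x, E x).
  { exists a. split; [lra|]. intros t Ht. replace t with a by lra. exact Ha. }
  destruct (completeness E HB HE) as [m [Hub Hlub]].
  assert (Ham : a <= m)
    by (apply Hub; split; [lra| intros t Ht; replace t with a by lra; exact Ha]).
  assert (Hmb : m <= b) by (apply Hlub; intros x [Hx _]; lra).
  assert (below : forall t, a <= t < m -> L < f t).
  { intros t Ht. destruct (Rlt_le_dec L (f t)) as [h|h]; auto.
    exfalso. assert (m <= t); [|lra]. apply Hlub. intros x [Hx Hx'].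
    destruct (Rle_lt_dec x t) as [h'|h']; auto.
    specialize (Hx' t ltac:(lra)). lra. }
  assert (at_m_le : f m <= L).
  { destruct (Rle_lt_dec (f m) L) as [h|h]; auto. exfalso.
    destruct (Req_dec m b) as [Heq|Hne]. { subst m; lra. }
    destruct (continuity_pt_eps f m (Hc m ltac:(lra)) (f m - L) ltac:(lra)) as [d [Hd Hd']].
    set (x' := Rmin (m + d/2) b).
    assert (Hx'm : m < x') by (unfold x', Rmin; destruct Rle_dec; lra).
    assert (E x').
    { split. unfold x', Rmin; destruct Rle_dec; lra.
      intros t Ht. destruct (Rlt_le_dec t m) as [h1|h1]. apply below; lra.
      assert (Rabs (t - m) < d).
      { unfold x', Rmin in Ht; destruct Rle_dec; apply Rabs_def1; lra. }
      specialize (Hd' t H). apply Rabs_def2 in Hd'. lra. }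
    specialize (Hub x' H). lra. }
  assert (at_m_ge : L <= f m).
  { destruct (Rle_lt_dec L (f m)) as [h|h]; auto. exfalso.
    assert (Hma : a < m). { destruct (Req_dec a m) as [<-|]; lra. }
    destruct (continuity_pt_eps f m (Hc m ltac:(lra)) (L - f m) ltac:(lra)) as [d [Hd Hd']].
    set (t := Rmax a (m - d/2)).
    assert (Ht1 : a <= t < m) by (unfold t, Rmax; destruct Rle_dec; lra).
    assert (Rabs (t - m) < d) by (unfold t, Rmax in *; destruct Rle_dec; apply Rabs_def1; lra).
    specialize (Hd' t H). apply Rabs_def2 in Hd'. specialize (below t Ht1). lra. }
  exists m. split; [|split; [lra| exact below]].
  split; auto. destruct (Req_dec a m) as [<-|]; lra.
Qed.

Lemma derivable_pt_lim_nonpos_of_left_gt f s d a : derivable_pt_lim f s d -> a < s ->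
  (forall t, a <= t < s -> f s < f t) -> d <= 0.
Proof.
  intros Hd Has Ht. destruct (Rle_lt_dec d 0) as [h|h]; auto. exfalso.
  destruct (Hd d h) as [del Hdel].
  set (hh := - Rmin (del/2) ((s - a)/2)).
  assert (Hdp := cond_pos del).
  assert (Hh1 : hh < 0) by (unfold hh, Rmin; destruct Rle_dec; lra).
  assert (Hh2 : Rabs hh < del) by (unfold hh, Rmin; destruct Rle_dec; rewrite Rabs_left; lra).
  specialize (Hdel hh ltac:(lra) Hh2).
  assert (f s < f (s + hh)) by (apply Ht; unfold hh, Rmin; destruct Rle_dec; lra).
  apply Rabs_def2 in Hdel. destruct Hdel as [_ Hdel].
  assert (Q : (f (s + hh) - f s) / hh * hh = f (s + hh) - f s) by (field; lra).
  set (q := (f (s + hh) - f s) / hh) in *. nra.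
Qed.

Lemma derivable_pt_lim_pos_right_gt f s d : derivable_pt_lim f s d -> 0 < d ->
  exists e, 0 < e /\ forall t, s < t < s + e -> f s < f t.
Proof.
  intros Hd h. destruct (Hd d h) as [del Hdel].
  exists del. split. apply cond_pos. intros t Ht.
  specialize (Hdel (t - s) ltac:(lra)).
  replace (s + (t - s)) with t in Hdel by ring.
  assert (Rabs (t - s) < del) by (rewrite Rabs_right; lra).
  specialize (Hdel H). apply Rabs_def2 in Hdel.
  assert (Q : (f t - f s) / (t - s) * (t - s) = f t - f s) by (field; lra).
  set (q := (f t - f s) / (t - s)) in *. nra.
Qed.

Lemma MVT_lower f df a b m : a <= b -> (forall x, a < x < b -> is_derive f x (df x)) ->
  (forall x, a <= x <= b -> continuity_pt f x) -> (forall x, a <= x <= b -> m <= df x) ->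
  f a + m * (b - a) <= f b.
Proof.
  intros Hab Hd Hc Hm.
  destruct (MVT_gen f a b df) as [c [Hc1 Hc2]].
  - intros x Hx. apply Hd. rewrite Rmin_left, Rmax_right in Hx; lra.
  - intros x Hx. apply Hc. rewrite Rmin_left, Rmax_right in Hx; lra.
  - rewrite Rmin_left, Rmax_right in Hc1 by lra. specialize (Hm c Hc1). nra.
Qed.

Lemma MVT_upper f df a b m : a <= b -> (forall x, a < x < b -> is_derive f x (df x)) ->
  (forall x, a <= x <= b -> continuity_pt f x) -> (forall x, a <= x <= b -> df x <= m) ->
  f b <= f a + m * (b - a).
Proof.
  intros Hab Hd Hc Hm.
  apply (MVT_lower (fun x => - f x) (fun x => - df x) a b (- m)) in Hab; auto.
  - lra.
  - intros x Hx. apply (is_derive_opp f x (df x)), Hd, Hx.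
  - intros x Hx. apply continuity_pt_opp, Hc, Hx.
  - intros x Hx. specialize (Hm x Hx). lra.
Qed.

Lemma Rpower_gt_0 x y : 0 < Rpower x y.
Proof. unfold Rpower; apply exp_pos. Qed.

Lemma Rpower_le_self x p : 1 <= p -> 0 < x <= 1 -> Rpower x p <= x.
Proof.
  intros hp hx. replace p with (1 + (p - 1)) by ring. rewrite Rpower_plus, Rpower_1 by lra.
  assert (Rpower x (p - 1) <= Rpower 1 (p - 1)) by (apply Rle_Rpower_l; lra).
  replace (Rpower 1 (p - 1)) with 1 in H
    by (unfold Rpower; rewrite ln_1, Rmult_0_r, exp_0; reflexivity).
  assert (0 < Rpower x (p - 1)) by apply Rpower_gt_0. nra.
Qed.

Lemma is_derive_Rpower x p : 0 < x ->
  is_derive (fun u => Rpower u p) x (p * Rpower x (p - 1)).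
Proof. intros h. apply is_derive_Reals, derivable_pt_lim_power, h. Qed.

Lemma Rpower_lipschitz a b u w p : 0 < a -> 1 <= p -> a <= u <= b -> a <= w <= b ->
  Rabs (Rpower u p - Rpower w p) <= p * Rpower b (p - 1) * Rabs (u - w).
Proof.
  intros ha hp hu hw.
  assert (Hd : forall x, a <= x <= b -> 0 <= p * Rpower x (p - 1) <= p * Rpower b (p - 1)).
  { intros x hx. assert (0 < Rpower x (p - 1)) by apply Rpower_gt_0. split; [nra|].
    apply Rmult_le_compat_l; [lra|]. apply Rle_Rpower_l; lra. }
  assert (ordered : forall u w, a <= u <= w -> w <= b ->
     0 <= Rpower w p - Rpower u p <= p * Rpower b (p - 1) * (w - u)).
  { intros u0 w0 H1 H2.
    assert (Hder : forall x, u0 < x < w0 ->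
      is_derive (fun u => Rpower u p) x (p * Rpower x (p - 1))).
    { intros; apply is_derive_Rpower; lra. }
    assert (Hc : forall x, u0 <= x <= w0 -> continuity_pt (fun u => Rpower u p) x).
    { intros x Hx. eapply continuity_pt_of_is_derive, is_derive_Rpower; lra. }
    assert (G1 := MVT_lower _ _ u0 w0 0 ltac:(lra) Hder Hc ltac:(intros x hx; apply Hd; lra)).
    assert (G2 := MVT_upper _ _ u0 w0 _ ltac:(lra) Hder Hc ltac:(intros x hx; apply Hd; lra)).
    simpl in G1, G2. lra. }
  destruct (Rle_dec u w) as [h|h].
  - destruct (ordered u w ltac:(lra) ltac:(lra)).
    rewrite !Rabs_left1 by lra. lra.
  - destruct (ordered w u ltac:(lra) ltac:(lra)).
    rewrite !Rabs_right by lra. lra.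
Qed.

Lemma abspow_of_pos u p : 0 < u -> abspow u p = Rpower u p.
Proof.
  intros h. unfold abspow. destruct (Req_EM_T u 0); [lra|]. rewrite Rabs_right; lra.
Qed.

Lemma abspow_opp u p : abspow (- u) p = abspow u p.
Proof.
  unfold abspow. destruct (Req_EM_T (-u) 0), (Req_EM_T u 0); try lra.
  rewrite Rabs_Ropp; reflexivity.
Qed.

Lemma abspow_ge_0 u p : 0 <= abspow u p.
Proof. unfold abspow. destruct Req_EM_T; [lra|]. left; apply Rpower_gt_0. Qed.

Lemma is_derive_abspow u p : 0 < u -> is_derive (fun u => abspow u p) u (p * Rpower u (p - 1)).
Proof.
  intros h. apply is_derive_ext_loc with (fun u => Rpower u p); [|apply is_derive_Rpower; auto].
  apply locally_of_Rabs with u; auto. intros y Hy. apply Rabs_def2 in Hy.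
  symmetry. apply abspow_of_pos. lra.
Qed.

Lemma continuity_pt_abspow u p : 1 <= p -> continuity_pt (fun u => abspow u p) u.
Proof.
  intros hp. destruct (Rtotal_order u 0) as [h|[->|h]].
  - assert (Hc : continuity_pt (comp (fun u => abspow u p) (fun u => - u)) u).
    { apply continuity_pt_comp. apply continuity_pt_opp, continuity_pt_id.
      eapply continuity_pt_of_is_derive, is_derive_abspow. lra. }
    intros eps He. destruct (Hc eps He) as [d [Hd H']]. exists d; split; auto.
    intros x Hx. specialize (H' x Hx). unfold comp in H'. rewrite !abspow_opp in H'. exact H'.
  - apply continuity_pt_of_eps. intros eps He. exists (Rmin eps 1). split.
    { apply Rmin_pos; lra. }
    intros y Hy. rewrite Rminus_0_r in Hy.
    replace (abspow 0 p) with 0 by (unfold abspow; destruct Req_EM_T; lra).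
    unfold abspow. destruct Req_EM_T. { rewrite Rminus_0_r, Rabs_R0; lra. }
    rewrite Rminus_0_r, Rabs_right by (left; apply Rpower_gt_0).
    assert (Rabs y < eps /\ Rabs y < 1) by (unfold Rmin in Hy; destruct Rle_dec; lra).
    assert (0 < Rabs y) by (apply Rabs_pos_lt; auto).
    assert (Rpower (Rabs y) p <= Rabs y) by (apply Rpower_le_self; lra). lra.
  - eapply continuity_pt_of_is_derive, is_derive_abspow. lra.
Qed.

Lemma Rpower_lt_of_lt_root a k q : 0 < q -> 0 < k -> 0 < a -> a < Rpower k (/ q) ->
  Rpower a q < k.
Proof.
  intros hq hk ha H. assert (G := Rlt_Rpower_l a _ q hq (conj ha H)).
  rewrite Rpower_mult, Rinv_l, Rpower_1 in G by lra. exact G.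
Qed.

(** * Local existence by Picard iteration *)

Lemma ex_RInt_of_segment_continuity k a t :
  (forall s, Rmin a t <= s <= Rmax a t -> continuity_pt k s) -> ex_RInt k a t.
Proof.
  intros H. apply (ex_RInt_continuous (V := R_CompleteNormedModule)).
  intros z Hz. apply continuity_pt_filterlim, H, Hz.
Qed.

Lemma ex_RInt_of_continuous k a t : (forall s, continuity_pt k s) -> ex_RInt k a t.
Proof. intros H. apply ex_RInt_of_segment_continuity. intros; apply H. Qed.

Lemma abs_RInt_le k a t M : ex_RInt k a t ->
  (forall s, Rmin a t <= s <= Rmax a t -> Rabs (k s) <= M) ->
  Rabs (RInt k a t) <= Rabs (t - a) * M.
Proof.
  intros He Hb. destruct (Rle_lt_dec a t) as [h|h].
  - rewrite (Rabs_right (t - a)) by lra. apply abs_RInt_le_const; [lra|auto|].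
    intros s Hs. apply Hb. rewrite Rmin_left, Rmax_right; lra.
  - rewrite (Rabs_left (t - a)) by lra. rewrite <- opp_RInt_swap by (apply ex_RInt_swap; auto).
    change (opp (RInt k t a)) with (- RInt k t a). rewrite Rabs_Ropp.
    replace (- (t - a)) with (a - t) by ring.
    apply abs_RInt_le_const; [lra| apply ex_RInt_swap; auto|].
    intros s Hs. apply Hb. rewrite Rmin_right, Rmax_left; lra.
Qed.

Lemma is_derive_RInt_loc k a t r : 0 < r ->
  (forall s, Rabs (s - t) < r -> continuity_pt k s) ->
  (forall b, Rabs (b - t) < r -> ex_RInt k a b) ->
  is_derive (fun s => RInt k a s) t (k t).
Proof.
  intros hr Hc He. apply (is_derive_RInt k (fun s => RInt k a s) a t).
  - apply locally_of_Rabs with r; auto. intros y Hy.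
    apply (RInt_correct (V := R_CompleteNormedModule)), He, Hy.
  - apply continuity_pt_filterlim, Hc. rewrite Rminus_eq_0, Rabs_R0; lra.
Qed.

Lemma is_derive_cst_plus c k t l : is_derive k t l -> is_derive (fun s => c + k s) t l.
Proof.
  intros H. assert (H' := is_derive_plus (fun _ => c) k t zero l (is_derive_const c t) H).
  replace l with (plus zero l). exact H'. unfold plus, zero; simpl. ring.
Qed.

Lemma geom_half_small C eps : 0 < eps ->
  exists N : nat, forall n, (N <= n)%nat -> C * (/2)^n < eps.
Proof.
  intros He. assert (Hq : Rabs (/2) < 1) by (rewrite Rabs_right; lra).
  assert (0 <= Rabs C) by apply Rabs_pos. assert (C <= Rabs C) by apply Rle_abs.
  destruct (pow_lt_1_zero (/2) Hq (eps / (Rabs C + 1))) as [N HN].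
  { apply Rdiv_lt_0_compat; lra. }
  exists N. intros n Hn. specialize (HN n Hn).
  assert (Hp : 0 < (/2)^n) by (apply pow_lt; lra).
  rewrite Rabs_right in HN by lra.
  apply Rlt_div_r in HN; [|lra]. nra.
Qed.

Lemma is_lim_seq_of_geom_bound (u : nat -> R) (l : R) C :
  (forall n, Rabs (u n - l) <= C * (/2)^n) -> is_lim_seq u l.
Proof.
  intros H. apply is_lim_seq_Reals. intros eps He.
  destruct (geom_half_small C eps He) as [N HN]. exists N. intros n Hn.
  unfold R_dist. specialize (H n). specialize (HN n Hn). lra.
Qed.

Lemma ex_finite_lim_seq_of_geom_cauchy (u : nat -> R) C :
  (forall n k, Rabs (u (n + k)%nat - u n) <= C * (/2)^n) -> ex_finite_lim_seq u.
Proof.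
  intros H. apply ex_lim_seq_cauchy_corr. intros eps.
  destruct (geom_half_small (2 * C) eps (cond_pos eps)) as [N HN]. exists N.
  intros n m Hn Hm. specialize (HN N (le_n N)).
  replace n with (N + (n - N))%nat by lia. replace m with (N + (m - N))%nat by lia.
  assert (G1 := H N (n - N)%nat). assert (G2 := H N (m - N)%nat).
  replace (u (N + (n - N))%nat - u (N + (m - N))%nat) with
    ((u (N + (n - N))%nat - u N) - (u (N + (m - N))%nat - u N)) by ring.
  eapply Rle_lt_trans. apply Rabs_triang. rewrite Rabs_Ropp. lra.
Qed.

Lemma lim_seq_dist_le (u : nat -> R) (l : R) n C : is_lim_seq u l ->
  (forall k, Rabs (u (k + n)%nat - u n) <= C) -> Rabs (l - u n) <= C.
Proof.
  intros Hl Hk. apply is_lim_seq_incr_n with (N := n) in Hl.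
  assert (H1 : is_lim_seq (fun k => Rabs (u (k + n)%nat - u n)) (Rabs (l - u n))).
  { apply (is_lim_seq_abs (fun k => u (k + n)%nat - u n) (l - u n)).
    apply is_lim_seq_minus'; auto. apply is_lim_seq_const. }
  exact (is_lim_seq_le _ _ _ _ Hk H1 (is_lim_seq_const C)).
Qed.

Lemma continuity_pt_of_geom_approx (f : R -> R) (fs : nat -> R -> R) t r C :
  0 < r -> (forall n s, continuity_pt (fs n) s) ->
  (forall n s, Rabs (s - t) < r -> Rabs (f s - fs n s) <= C * (/2)^n) ->
  continuity_pt f t.
Proof.
  intros Hr Hc Hb. apply continuity_pt_of_eps. intros eps He.
  destruct (geom_half_small C (eps/3) ltac:(lra)) as [N HN]. specialize (HN N (le_n N)).
  destruct (continuity_pt_eps (fs N) t (Hc N t) (eps/3) ltac:(lra)) as [d [Hd Hd']].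
  exists (Rmin d r). split. apply Rmin_pos; lra.
  intros y Hy. assert (Hy1 : Rabs (y - t) < d) by (eapply Rlt_le_trans; [apply Hy| apply Rmin_l]).
  assert (Hy2 : Rabs (y - t) < r) by (eapply Rlt_le_trans; [apply Hy| apply Rmin_r]).
  assert (B1 := Hb N y Hy2). assert (B2 := Hb N t ltac:(rewrite Rminus_eq_0, Rabs_R0; lra)).
  specialize (Hd' y Hy1).
  replace (f y - f t) with ((f y - fs N y) + (fs N y - fs N t) - (f t - fs N t)) by ring.
  eapply Rle_lt_trans. apply Rabs_triang. rewrite Rabs_Ropp.
  eapply Rle_lt_trans. apply Rplus_le_compat_r. apply Rabs_triang. lra.
Qed.

Lemma is_lim_seq_RInt_of_geom_approx (k : nat -> R -> R) (k_lim : R -> R) a t C c :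
  (forall n s, continuity_pt (k n) s) ->
  (forall s, Rmin a t <= s <= Rmax a t -> continuity_pt k_lim s) ->
  (forall n s, Rmin a t <= s <= Rmax a t -> Rabs (k_lim s - k n s) <= C * (/2)^n) ->
  is_lim_seq (fun n => c + RInt (k n) a t) (c + RInt k_lim a t).
Proof.
  intros Hk Hkl Hb. apply (is_lim_seq_of_geom_bound _ _ (Rabs (t - a) * C)).
  intros n. rewrite Rminus_plus_l_l, <- (RInt_minus (V := R_CompleteNormedModule));
    [| apply ex_RInt_of_segment_continuity; auto..].
  rewrite Rmult_assoc.
  apply abs_RInt_le;
    [apply ex_RInt_of_segment_continuity; intros; apply continuity_pt_minus; auto|].
  intros s Hs. change (Rabs (k n s - k_lim s) <= C * (/ 2) ^ n).
  rewrite <- Rabs_Ropp, Ropp_minus_distr. apply Hb, Hs.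
Qed.

Lemma is_lim_seq_eq (u : nat -> R) (a b : R) : is_lim_seq u a -> is_lim_seq u b -> a = b.
Proof.
  intros Ha Hb. apply is_lim_seq_unique in Ha, Hb. rewrite Ha in Hb. injection Hb; auto.
Qed.

Section Picard.

Variables (F : R -> R -> R -> R) (x0 A B L MF h : R).

Hypothesis F_cont : forall (f g : R -> R) t, continuity_pt f t -> continuity_pt g t ->
  continuity_pt (fun s => F s (f s) (g s)) t.
Hypothesis F_lipschitz : forall s a b a' b', x0 - 1 <= s <= x0 + 1 ->
  Rabs (F s a b - F s a' b') <= L * (Rabs (a - a') + Rabs (b - b')).
Hypothesis F_bounded : forall s, x0 - 1 <= s <= x0 + 1 -> Rabs (F s A B) <= MF.
Hypothesis L_ge_0 : 0 <= L.
Hypothesis h_gt_0 : 0 < h.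
Hypothesis h_le_half : 2 * h <= 1.
Hypothesis h_contraction : 2 * h * (1 + L) <= / 2.

Fixpoint picard (n : nat) : (R -> R) * (R -> R) :=
  match n with
  | O => (fun _ => A, fun _ => B)
  | S m => let fg := picard m in
      (fun t => A + RInt (snd fg) x0 t,
       fun t => B + RInt (fun s => F s (fst fg s) (snd fg s)) x0 t)
  end.

Definition picf n := fst (picard n).
Definition picg n := snd (picard n).

Let picF n s := F s (picf n s) (picg n s).

Let M := 2 * h * (Rabs B + MF).

Lemma MF_ge_0 : 0 <= MF.
Proof.
  assert (H := F_bounded x0 ltac:(lra)); assert (0 <= Rabs (F x0 A B)) by apply Rabs_pos. lra.
Qed.

Lemma M_ge_0 : 0 <= M.
Proof. assert (H := MF_ge_0). assert (0 <= Rabs B) by apply Rabs_pos. unfold M. nra. Qed.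

Lemma picard_cont n s : continuity_pt (picf n) s /\ continuity_pt (picg n) s.
Proof.
  revert s. induction n as [|n IH]; intros s.
  - unfold picf, picg; simpl; split; apply continuity_pt_cst.
  - assert (Hint : forall k, (forall s, continuity_pt k s) -> forall c,
      continuity_pt (fun t => c + RInt k x0 t) s).
    { intros k Hk c. eapply continuity_pt_of_is_derive, is_derive_cst_plus.
      apply (is_derive_RInt_loc k x0 s 1); [lra| intros; apply Hk|].
      intros; apply ex_RInt_of_continuous, Hk. }
    split; apply Hint; intros; [apply IH| apply F_cont; apply IH].
Qed.

Lemma segment_in_strip t s : Rabs (t - x0) <= 2 * h -> Rmin x0 t <= s <= Rmax x0 t ->
  x0 - 1 <= s <= x0 + 1 /\ Rabs (s - x0) <= 2 * h.
Proof.
  intros Ht Hs. apply Rabs_sub_le_of_segment in Hs. split; [apply Rabs_le_between|]; lra.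
Qed.

Lemma picF_cont n s : continuity_pt (picF n) s.
Proof. apply F_cont; apply picard_cont. Qed.

Lemma picard_step_bound_O t : Rabs (t - x0) <= 2 * h ->
  Rabs (picf 1 t - picf 0 t) + Rabs (picg 1 t - picg 0 t) <= M.
Proof.
  intros Ht. assert (0 <= Rabs (t - x0)) by apply Rabs_pos.
  change (Rabs (A + RInt (fun _ => B) x0 t - A)
    + Rabs (B + RInt (fun s => F s A B) x0 t - B) <= M).
  rewrite !Rplus_minus_l.
  assert (H1 : Rabs (RInt (fun _ => B) x0 t) <= Rabs (t - x0) * Rabs B).
  { apply abs_RInt_le; [apply ex_RInt_of_continuous; intros; apply continuity_pt_cst|].
    intros; lra. }
  assert (H2 : Rabs (RInt (fun s => F s A B) x0 t) <= Rabs (t - x0) * MF).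
  { apply abs_RInt_le.
    - apply ex_RInt_of_continuous. intros s.
      apply (F_cont (fun _ => A) (fun _ => B)); apply continuity_pt_cst.
    - intros s Hs. apply F_bounded, (segment_in_strip t s Ht Hs). }
  assert (0 <= Rabs B) by apply Rabs_pos. assert (HMF := MF_ge_0). unfold M. nra.
Qed.

Lemma picard_step_bound n t : Rabs (t - x0) <= 2 * h ->
  Rabs (picf (S n) t - picf n t) + Rabs (picg (S n) t - picg n t) <= M * (/2)^n.
Proof.
  assert (HM := M_ge_0). assert (HC := picard_cont).
  revert t. induction n as [|n IH]; intros t Ht.
  { rewrite pow_O, Rmult_1_r. apply picard_step_bound_O, Ht. }
  assert (0 <= Rabs (t - x0)) by apply Rabs_pos.
  change (Rabs (A + RInt (picg (S n)) x0 t - (A + RInt (picg n) x0 t))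
    + Rabs (B + RInt (picF (S n)) x0 t - (B + RInt (picF n) x0 t)) <= M * (/2)^(S n)).
  rewrite !Rminus_plus_l_l.
  rewrite <- !(RInt_minus (V := R_CompleteNormedModule))
    by (apply ex_RInt_of_continuous; intros; first [apply HC | apply picF_cont]).
  assert (H1 : Rabs (RInt (fun s => picg (S n) s - picg n s) x0 t)
               <= Rabs (t - x0) * (M * (/2)^n)).
  { apply abs_RInt_le.
    - apply ex_RInt_of_continuous. intros. apply continuity_pt_minus; apply HC.
    - intros s Hs. specialize (IH s (proj2 (segment_in_strip t s Ht Hs))).
      assert (0 <= Rabs (picf (S n) s - picf n s)) by apply Rabs_pos. lra. }
  assert (H2 : Rabs (RInt (fun s => picF (S n) s - picF n s) x0 t)
               <= Rabs (t - x0) * (L * (M * (/2)^n))).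
  { apply abs_RInt_le.
    - apply ex_RInt_of_continuous. intros. apply continuity_pt_minus; apply picF_cont.
    - intros s Hs. destruct (segment_in_strip t s Ht Hs) as [Hs1 Hs2].
      eapply Rle_trans; [apply F_lipschitz, Hs1|].
      apply Rmult_le_compat_l; [lra| apply IH, Hs2]. }
  assert (0 < (/2)^n) by (apply pow_lt; lra).
  assert (Rabs (t - x0) * (1 + L) * (M * (/2)^n) <= / 2 * (M * (/2)^n))
    by (apply Rmult_le_compat_r; nra).
  simpl pow. change (minus ?a ?b) with (a - b). lra.
Qed.

Lemma picard_cauchy n k t : Rabs (t - x0) <= 2 * h ->
  Rabs (picf (n + k) t - picf n t) <= 2 * M * (/2)^n /\
  Rabs (picg (n + k) t - picg n t) <= 2 * M * (/2)^n.
Proof.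
  intros Ht.
  assert (telescope : forall j,
    Rabs (picf (n + j) t - picf n t) + Rabs (picg (n + j) t - picg n t)
      <= 2 * M * ((/2)^n - (/2)^(n + j))).
  { clear k. intros k. induction k as [|k IH].
    - rewrite Nat.add_0_r, !Rminus_eq_0, Rabs_R0. lra.
    - replace (n + S k)%nat with (S (n + k)) by lia.
      assert (D := picard_step_bound (n + k) t Ht).
      assert (T1 := Rabs_triang (picf (S (n + k)) t - picf (n + k) t) (picf (n + k) t - picf n t)).
      assert (T2 := Rabs_triang (picg (S (n + k)) t - picg (n + k) t) (picg (n + k) t - picg n t)).
      replace (picf (S (n + k)) t - picf (n + k) t + (picf (n + k) t - picf n t))
        with (picf (S (n + k)) t - picf n t) in T1 by ring.
      replace (picg (S (n + k)) t - picg (n + k) t + (picg (n + k) t - picg n t))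
        with (picg (S (n + k)) t - picg n t) in T2 by ring.
      simpl pow. lra. }
  specialize (telescope k).
  assert (0 < (/2)^(n + k)) by (apply pow_lt; lra). assert (HM := M_ge_0).
  assert (0 <= Rabs (picf (n + k) t - picf n t)) by apply Rabs_pos.
  assert (0 <= Rabs (picg (n + k) t - picg n t)) by apply Rabs_pos.
  split; nra.
Qed.

Definition picf_lim t := real (Lim_seq (fun n => picf n t)).
Definition picg_lim t := real (Lim_seq (fun n => picg n t)).

Lemma picard_lim_approx t : Rabs (t - x0) <= 2 * h ->
  is_lim_seq (fun n => picf n t) (picf_lim t) /\
  is_lim_seq (fun n => picg n t) (picg_lim t) /\
  forall n, Rabs (picf_lim t - picf n t) <= 2 * M * (/2)^n /\
            Rabs (picg_lim t - picg n t) <= 2 * M * (/2)^n.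
Proof.
  intros Ht.
  assert (Lf : is_lim_seq (fun n => picf n t) (picf_lim t)).
  { apply Lim_seq_correct', (ex_finite_lim_seq_of_geom_cauchy _ (2 * M)).
    intros n k. apply picard_cauchy, Ht. }
  assert (Lg : is_lim_seq (fun n => picg n t) (picg_lim t)).
  { apply Lim_seq_correct', (ex_finite_lim_seq_of_geom_cauchy _ (2 * M)).
    intros n k. apply picard_cauchy, Ht. }
  split; [exact Lf|]. split; [exact Lg|]. intros n.
  split; [apply (lim_seq_dist_le (fun n => picf n t))| apply (lim_seq_dist_le (fun n => picg n t))];
    auto; intros k; rewrite Nat.add_comm; apply picard_cauchy, Ht.
Qed.

Lemma picard_lim_cont t : Rabs (t - x0) < 2 * h ->
  continuity_pt picf_lim t /\ continuity_pt picg_lim t.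
Proof.
  intros Ht. set (r := 2 * h - Rabs (t - x0)).
  assert (Hr : forall s, Rabs (s - t) < r -> Rabs (s - x0) <= 2 * h).
  { intros s Hs. unfold r in Hs.
    replace (s - x0) with ((s - t) + (t - x0)) by ring.
    eapply Rle_trans. apply Rabs_triang. lra. }
  split.
  - apply (continuity_pt_of_geom_approx _ picf t r (2 * M)); [unfold r; lra| apply picard_cont|].
    intros n s Hs. apply (picard_lim_approx s (Hr s Hs)).
  - apply (continuity_pt_of_geom_approx _ picg t r (2 * M)); [unfold r; lra| apply picard_cont|].
    intros n s Hs. apply (picard_lim_approx s (Hr s Hs)).
Qed.

Let picF_lim s := F s (picf_lim s) (picg_lim s).

Lemma picard_lim_integral t : Rabs (t - x0) < 2 * h ->
  picf_lim t = A + RInt picg_lim x0 t /\ picg_lim t = B + RInt picF_lim x0 t.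
Proof.
  intros Ht. assert (HC := picard_cont). assert (HM := M_ge_0).
  assert (Hseg : forall s, Rmin x0 t <= s <= Rmax x0 t -> Rabs (s - x0) < 2 * h).
  { intros s Hs. apply Rabs_sub_le_of_segment in Hs. lra. }
  assert (Hlc : forall s, Rmin x0 t <= s <= Rmax x0 t ->
    continuity_pt picf_lim s /\ continuity_pt picg_lim s)
    by (intros; apply picard_lim_cont, Hseg; auto).
  assert (0 <= Rabs (t - x0)) by apply Rabs_pos.
  destruct (picard_lim_approx t ltac:(lra)) as [Lf [Lg _]].
  apply (is_lim_seq_incr_n _ 1) in Lf, Lg.
  split.
  - eapply is_lim_seq_eq; [exact Lf|].
    apply (is_lim_seq_ext (fun n => A + RInt (picg n) x0 t));
      [intros n; rewrite Nat.add_1_r; reflexivity|].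
    apply (is_lim_seq_RInt_of_geom_approx picg picg_lim x0 t (2 * M));
      [intros; apply HC| intros; apply Hlc; auto|].
    intros n s Hs. apply picard_lim_approx. specialize (Hseg s Hs). lra.
  - eapply is_lim_seq_eq; [exact Lg|].
    apply (is_lim_seq_ext (fun n => B + RInt (picF n) x0 t));
      [intros n; rewrite Nat.add_1_r; reflexivity|].
    apply (is_lim_seq_RInt_of_geom_approx picF picF_lim x0 t (L * (4 * M)));
      [intros; apply picF_cont| intros; apply F_cont; apply Hlc; auto|].
    intros n s Hs. specialize (Hseg s Hs).
    destruct (picard_lim_approx s ltac:(lra)) as [_ [_ Hb]]. destruct (Hb n) as [Hb1 Hb2].
    unfold picF_lim, picF. eapply Rle_trans; [apply F_lipschitz, Rabs_le_between; lra|].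
    assert (0 < (/2)^n) by (apply pow_lt; lra).
    replace (L * (4 * M) * (/ 2) ^ n) with (L * (2 * M * (/ 2) ^ n + 2 * M * (/ 2) ^ n)) by ring.
    apply Rmult_le_compat_l; lra.
Qed.

Lemma picard_lim_solution :
  picf_lim x0 = A /\ picg_lim x0 = B /\
  forall t, Rabs (t - x0) < 2 * h ->
    is_derive picf_lim t (picg_lim t) /\ is_derive picg_lim t (picF_lim t).
Proof.
  assert (E0 : Rabs (x0 - x0) < 2 * h) by (rewrite Rminus_eq_0, Rabs_R0; lra).
  destruct (picard_lim_integral x0 E0) as [I1 I2].
  rewrite RInt_point in I1, I2. change zero with 0 in I1, I2.
  split; [lra|]. split; [lra|].
  intros t Ht. set (r := 2 * h - Rabs (t - x0)).
  assert (Hr : forall s, Rabs (s - t) < r -> Rabs (s - x0) < 2 * h).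
  { intros s Hs. unfold r in Hs.
    replace (s - x0) with ((s - t) + (t - x0)) by ring.
    eapply Rle_lt_trans. apply Rabs_triang. lra. }
  assert (Hseg : forall b s, Rabs (b - t) < r -> Rmin x0 b <= s <= Rmax x0 b ->
    Rabs (s - x0) < 2 * h).
  { intros b s Hb Hs. apply Rabs_sub_le_of_segment in Hs. specialize (Hr b Hb). lra. }
  assert (Hc : forall s, Rabs (s - x0) < 2 * h ->
    continuity_pt picg_lim s /\ continuity_pt picF_lim s).
  { intros s Hs. destruct (picard_lim_cont s Hs). split; [|apply F_cont]; auto. }
  split.
  - apply (is_derive_ext_loc (fun s => A + RInt picg_lim x0 s)).
    { apply locally_of_Rabs with r; [unfold r; lra|]. intros y Hy.
      symmetry. apply (picard_lim_integral y (Hr y Hy)). }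
    apply is_derive_cst_plus, is_derive_RInt_loc with r; [unfold r; lra| |].
    + intros s Hs. apply Hc, Hr, Hs.
    + intros b Hb. apply ex_RInt_of_segment_continuity. intros s Hs. apply Hc, (Hseg b s Hb Hs).
  - apply (is_derive_ext_loc (fun s => B + RInt picF_lim x0 s)).
    { apply locally_of_Rabs with r; [unfold r; lra|]. intros y Hy.
      symmetry. apply (picard_lim_integral y (Hr y Hy)). }
    apply is_derive_cst_plus, is_derive_RInt_loc with r; [unfold r; lra| |].
    + intros s Hs. apply Hc, Hr, Hs.
    + intros b Hb. apply ex_RInt_of_segment_continuity. intros s Hs. apply Hc, (Hseg b s Hb Hs).
Qed.

End Picard.

Lemma picard_local_existence (F : R -> R -> R -> R) (x0 A B L MF : R) :
  (forall (f g : R -> R) t, continuity_pt f t -> continuity_pt g t ->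
     continuity_pt (fun s => F s (f s) (g s)) t) ->
  (forall s a b a' b', x0 - 1 <= s <= x0 + 1 ->
     Rabs (F s a b - F s a' b') <= L * (Rabs (a - a') + Rabs (b - b'))) ->
  (forall s, x0 - 1 <= s <= x0 + 1 -> Rabs (F s A B) <= MF) ->
  0 <= L ->
  exists r (f g : R -> R), 0 < r /\ f x0 = A /\ g x0 = B /\
    forall t, Rabs (t - x0) < r -> is_derive f t (g t) /\ is_derive g t (F t (f t) (g t)).
Proof.
  intros HF HLip HM HL0.
  set (h := Rmin (/2) (/ (4 * (1 + L)))).
  assert (Hh : 0 < h) by (apply Rmin_pos; [lra| apply Rinv_0_lt_compat; lra]).
  assert (Hh1 : 2 * h <= 1) by (assert (h <= /2) by apply Rmin_l; lra).
  assert (Hh2 : 2 * h * (1 + L) <= /2).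
  { assert (h <= / (4 * (1 + L))) by apply Rmin_r.
    apply (Rmult_le_compat_r (4 * (1 + L))) in H; [|lra]. rewrite Rinv_l in H; lra. }
  destruct (picard_lim_solution F x0 A B L MF h) as [Hf0 [Hg0 Hd]]; auto.
  exists (2 * h), (picf_lim F x0 A B), (picg_lim F x0 A B). split; [lra|]. auto.
Qed.

Lemma continuity_pt_of_lipschitz (f : R -> R) K x :
  (forall y, Rabs (f y - f x) <= K * Rabs (y - x)) -> continuity_pt f x.
Proof.
  intros H. apply continuity_pt_of_eps. intros eps He.
  assert (0 <= Rabs K) by apply Rabs_pos. assert (K <= Rabs K) by apply Rle_abs.
  exists (eps / (Rabs K + 1)). split; [apply Rdiv_lt_0_compat; lra|].
  intros y Hy. eapply Rle_lt_trans; [apply H|].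
  assert (0 <= Rabs (y - x)) by apply Rabs_pos.
  apply Rlt_div_r in Hy; [|lra]. nra.
Qed.

Definition clamp (B x : R) := Rmax (B / 2) (Rmin x (2 * B)).

Lemma clamp_lipschitz B x y : 0 < B -> Rabs (clamp B x - clamp B y) <= Rabs (x - y).
Proof.
  intros hB. unfold clamp, Rmax, Rmin.
  repeat destruct Rle_dec; unfold Rabs; repeat destruct Rcase_abs; lra.
Qed.

Lemma clamp_range B x : 0 < B -> B / 2 <= clamp B x <= 2 * B.
Proof. intros hB. unfold clamp, Rmax, Rmin. repeat destruct Rle_dec; lra. Qed.

Lemma clamp_id B x : 0 < B -> B / 2 <= x <= 2 * B -> clamp B x = x.
Proof. intros hB hx. unfold clamp, Rmax, Rmin. repeat destruct Rle_dec; lra. Qed.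

Lemma Rabs_half_mult_le s x0 b : x0 - 1 <= s <= x0 + 1 ->
  Rabs (/ 2 * s * b) <= (Rabs x0 + 1) / 2 * Rabs b.
Proof.
  intros Hs. rewrite !Rabs_mult, (Rabs_right (/2)) by lra.
  assert (Rabs s <= Rabs x0 + 1) by (unfold Rabs; repeat destruct Rcase_abs; lra).
  assert (0 <= Rabs b) by apply Rabs_pos. nra.
Qed.

Section ClampedEquation.

Variables (p B : R).

Hypothesis p_ge_1 : 1 <= p.
Hypothesis B_gt_0 : 0 < B.

(* Clamping the velocity to [[B/2, 2B]] makes the right-hand side globally Lipschitz;
   near a point where the velocity equals [B] the clamp is inactive. *)
Definition clamped_rhs s a b := / 2 * s * b - gam p * a - Rpower (clamp B b) p.

Let Lp := p * Rpower (2 * B) (p - 1).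

Lemma Lp_ge_0 : 0 <= Lp.
Proof. assert (0 < Rpower (2 * B) (p - 1)) by apply Rpower_gt_0. unfold Lp. nra. Qed.

Lemma Rpower_clamp_lipschitz b b' :
  Rabs (Rpower (clamp B b) p - Rpower (clamp B b') p) <= Lp * Rabs (b - b').
Proof.
  eapply Rle_trans.
  - apply (Rpower_lipschitz (B / 2) (2 * B)); try lra; apply clamp_range; lra.
  - apply Rmult_le_compat_l; [apply Lp_ge_0| apply clamp_lipschitz; lra].
Qed.

Lemma clamped_rhs_cont (f g : R -> R) t : continuity_pt f t -> continuity_pt g t ->
  continuity_pt (fun s => clamped_rhs s (f s) (g s)) t.
Proof.
  intros Hf Hg. unfold clamped_rhs.
  repeat apply continuity_pt_minus; repeat apply continuity_pt_mult;
    try apply continuity_pt_cst; try apply continuity_pt_id; auto.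
  apply (continuity_pt_comp g (fun b => Rpower (clamp B b) p)); [exact Hg|].
  apply continuity_pt_of_lipschitz with Lp. intros y. apply Rpower_clamp_lipschitz.
Qed.

Lemma clamped_rhs_lipschitz x0 s a b a' b' : x0 - 1 <= s <= x0 + 1 ->
  Rabs (clamped_rhs s a b - clamped_rhs s a' b')
    <= ((Rabs x0 + 1) / 2 + Rabs (gam p) + Lp) * (Rabs (a - a') + Rabs (b - b')).
Proof.
  intros Hs. unfold clamped_rhs.
  replace (/ 2 * s * b - gam p * a - Rpower (clamp B b) p
           - (/ 2 * s * b' - gam p * a' - Rpower (clamp B b') p))
    with (/ 2 * s * (b - b') + - (gam p * (a - a'))
          + - (Rpower (clamp B b) p - Rpower (clamp B b') p)) by ring.
  assert (E1 := Rabs_half_mult_le s x0 (b - b') Hs). assert (P1 := Rpower_clamp_lipschitz b b').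
  assert (HLp := Lp_ge_0). assert (0 <= Rabs x0) by apply Rabs_pos.
  assert (0 <= Rabs (gam p)) by apply Rabs_pos.
  assert (0 <= Rabs (a - a')) by apply Rabs_pos. assert (0 <= Rabs (b - b')) by apply Rabs_pos.
  eapply Rle_trans; [apply Rabs_triang|]. rewrite Rabs_Ropp.
  eapply Rle_trans; [apply Rplus_le_compat_r, Rabs_triang|].
  rewrite Rabs_Ropp, (Rabs_mult (gam p)). nra.
Qed.

Lemma clamped_rhs_bound x0 A s : x0 - 1 <= s <= x0 + 1 ->
  Rabs (clamped_rhs s A B)
    <= (Rabs x0 + 1) / 2 * Rabs B + Rabs (gam p) * Rabs A + Rpower (clamp B B) p.
Proof.
  intros Hs. unfold clamped_rhs.
  assert (E1 := Rabs_half_mult_le s x0 B Hs).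
  assert (0 < Rpower (clamp B B) p) by apply Rpower_gt_0.
  unfold Rminus. eapply Rle_trans; [apply Rabs_triang|].
  rewrite Rabs_Ropp, (Rabs_right (Rpower _ _)) by lra.
  eapply Rle_trans; [apply Rplus_le_compat_r, Rabs_triang|].
  rewrite Rabs_Ropp, (Rabs_mult (gam p)). lra.
Qed.

End ClampedEquation.

Lemma ode_local_existence p x0 A B : 1 < p -> 0 < B ->
  exists r (f g : R -> R), 0 < r /\ f x0 = A /\ g x0 = B /\
    forall t, Rabs (t - x0) < r -> is_derive f t (g t) /\ is_derive g t (ode_rhs p f g t).
Proof.
  intros hp hB.
  destruct (picard_local_existence (clamped_rhs p B) x0 A B _ _
    (clamped_rhs_cont p B ltac:(lra) hB) (clamped_rhs_lipschitz p B ltac:(lra) hB x0)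
    (clamped_rhs_bound p B x0 A))
    as [r [f [g [Hr [Hf0 [Hg0 Hd]]]]]].
  { assert (HLp := Lp_ge_0 p B). assert (0 <= Rabs x0) by apply Rabs_pos.
    assert (0 <= Rabs (gam p)) by apply Rabs_pos. lra. }
  assert (Hgc : continuity_pt g x0).
  { apply continuity_pt_of_is_derive with (clamped_rhs p B x0 (f x0) (g x0)).
    apply Hd. rewrite Rminus_eq_0, Rabs_R0; lra. }
  destruct (continuity_pt_eps g x0 Hgc (B / 2) ltac:(lra)) as [d [Hd0 Hd1]].
  exists (Rmin r d), f, g. split; [apply Rmin_pos; lra|]. split; [auto|]. split; [auto|].
  intros t Ht.
  assert (Ht1 : Rabs (t - x0) < r) by (eapply Rlt_le_trans; [apply Ht| apply Rmin_l]).
  assert (Ht2 : Rabs (t - x0) < d) by (eapply Rlt_le_trans; [apply Ht| apply Rmin_r]).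
  specialize (Hd1 t Ht2). rewrite Hg0 in Hd1. apply Rabs_def2 in Hd1.
  destruct (Hd t Ht1) as [D1 D2]. split; [exact D1|].
  unfold clamped_rhs in D2. rewrite clamp_id in D2 by lra.
  unfold ode_rhs. rewrite abspow_of_pos by lra. exact D2.
Qed.

(** * One-sided limits and continuation of solutions *)

Definition left_lim (f : R -> R) (r l : R) := forall eps, 0 < eps ->
  exists d, 0 < d /\ forall t, r - d < t < r -> Rabs (f t - l) < eps.

Lemma left_lim_ext f g r l a : a < r -> (forall t, a < t < r -> f t = g t) ->
  left_lim f r l -> left_lim g r l.
Proof.
  intros ha He H eps Heps. destruct (H eps Heps) as [d [Hd Hd']].
  exists (Rmin d (r - a)). split; [apply Rmin_pos; lra|].
  intros t Ht. assert (Rmin d (r - a) <= d) by apply Rmin_l.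
  assert (Rmin d (r - a) <= r - a) by apply Rmin_r.
  rewrite <- He by lra. apply Hd'. lra.
Qed.

Lemma left_lim_const c r : left_lim (fun _ => c) r c.
Proof. intros eps He. exists 1. split; [lra|]. intros. rewrite Rminus_eq_0, Rabs_R0; lra. Qed.

Lemma left_lim_id r : left_lim (fun t => t) r r.
Proof. intros eps He. exists eps. split; auto. intros t Ht. rewrite Rabs_left; lra. Qed.

Lemma left_lim_plus f g r l m : left_lim f r l -> left_lim g r m ->
  left_lim (fun t => f t + g t) r (l + m).
Proof.
  intros Hf Hg eps He. destruct (Hf (eps/2) ltac:(lra)) as [d1 [H1 H1']].
  destruct (Hg (eps/2) ltac:(lra)) as [d2 [H2 H2']].
  exists (Rmin d1 d2). split; [apply Rmin_pos; lra|].
  intros t Ht. assert (Rmin d1 d2 <= d1) by apply Rmin_l. assert (Rmin d1 d2 <= d2) by apply Rmin_r.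
  specialize (H1' t ltac:(lra)). specialize (H2' t ltac:(lra)).
  replace (f t + g t - (l + m)) with ((f t - l) + (g t - m)) by ring.
  eapply Rle_lt_trans; [apply Rabs_triang| lra].
Qed.

Lemma left_lim_comp f g r l : left_lim f r l -> continuity_pt g l ->
  left_lim (fun t => g (f t)) r (g l).
Proof.
  intros Hf Hg eps He. destruct (continuity_pt_eps g l Hg eps He) as [d [Hd Hd']].
  destruct (Hf d Hd) as [d1 [H1 H1']]. exists d1; split; [exact H1|].
  intros t Ht; apply Hd', H1', Ht.
Qed.

Lemma left_lim_minus f g r l m : left_lim f r l -> left_lim g r m ->
  left_lim (fun t => f t - g t) r (l - m).
Proof.
  intros Hf Hg. apply (left_lim_plus f (fun t => - g t)); [exact Hf|].
  apply (left_lim_comp g Ropp), continuity_pt_opp, continuity_pt_id; exact Hg.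
Qed.

Lemma left_lim_mult f g r l m : left_lim f r l -> left_lim g r m ->
  left_lim (fun t => f t * g t) r (l * m).
Proof.
  intros Hf Hg eps He.
  assert (0 <= Rabs l) by apply Rabs_pos. assert (0 <= Rabs m) by apply Rabs_pos.
  set (eta := Rmin 1 (eps / (Rabs l + Rabs m + 2))).
  assert (Heta : 0 < eta) by (apply Rmin_pos; [lra| apply Rdiv_lt_0_compat; lra]).
  assert (Heta1 : eta <= 1) by apply Rmin_l.
  assert (Heta2 : eta * (Rabs l + Rabs m + 2) <= eps).
  { assert (eta <= eps / (Rabs l + Rabs m + 2)) by apply Rmin_r.
    apply (Rmult_le_compat_r (Rabs l + Rabs m + 2)) in H1; [|lra].
    unfold Rdiv in H1. rewrite Rmult_assoc, Rinv_l in H1 by lra. lra. }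
  destruct (Hf eta Heta) as [d1 [H1 H1']]. destruct (Hg eta Heta) as [d2 [H2 H2']].
  exists (Rmin d1 d2). split; [apply Rmin_pos; lra|].
  intros t Ht. assert (Rmin d1 d2 <= d1) by apply Rmin_l. assert (Rmin d1 d2 <= d2) by apply Rmin_r.
  specialize (H1' t ltac:(lra)). specialize (H2' t ltac:(lra)).
  replace (f t * g t - l * m) with (f t * (g t - m) + m * (f t - l)) by ring.
  eapply Rle_lt_trans; [apply Rabs_triang|]. rewrite !Rabs_mult.
  assert (Rabs (f t) <= Rabs l + 1).
  { replace (f t) with ((f t - l) + l) by ring. eapply Rle_trans; [apply Rabs_triang| lra]. }
  assert (Rabs (f t) * Rabs (g t - m) <= (Rabs l + 1) * eta)
    by (apply Rmult_le_compat; try apply Rabs_pos; lra).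
  assert (Rabs m * Rabs (f t - l) <= Rabs m * eta) by (apply Rmult_le_compat_l; lra).
  nra.
Qed.

Lemma left_lim_ge f r l a c : a < r -> left_lim f r l ->
  (forall t, a < t < r -> c <= f t) -> c <= l.
Proof.
  intros ha Hf Hc. destruct (Rle_lt_dec c l) as [h|h]; auto. exfalso.
  destruct (Hf (c - l) ltac:(lra)) as [d [Hd Hd']].
  set (t := Rmax a (r - d) / 2 + r / 2).
  assert (Ht : a < t < r /\ r - d < t) by (unfold t, Rmax; destruct Rle_dec; lra).
  specialize (Hd' t ltac:(lra)). specialize (Hc t ltac:(lra)). apply Rabs_def2 in Hd'. lra.
Qed.

Lemma left_lim_of_nondecreasing f r a U : a < r ->
  (forall t s, a <= t <= s -> s < r -> f t <= f s) ->
  (forall t, a <= t < r -> f t <= U) -> exists l, left_lim f r l.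
Proof.
  intros ha Hm HU.
  set (E := fun y => exists t, a <= t < r /\ y = f t).
  assert (HB : bound E) by (exists U; intros y [t [Ht ->]]; apply HU; auto).
  assert (HE : exists y, E y) by (exists (f a); exists a; split; [lra| auto]).
  destruct (completeness E HB HE) as [l [Hub Hlub]].
  exists l. intros eps He.
  assert (Hex : exists t1, a <= t1 < r /\ l - eps < f t1).
  { apply NNPP. intros Hn. assert (l <= l - eps); [|lra].
    apply Hlub. intros y [t [Ht ->]]. destruct (Rle_lt_dec (f t) (l - eps)); auto.
    exfalso. apply Hn. exists t. auto. }
  destruct Hex as [t1 [Ht1 Hf1]]. exists (r - t1). split; [lra|].
  intros t Ht. assert (f t <= l) by (apply Hub; exists t; split; [lra| auto]).
  assert (f t1 <= f t) by (apply Hm; lra).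
  rewrite Rabs_left1 by lra. lra.
Qed.

Lemma left_lim_diff_quotient f df a r A d : a < r ->
  (forall t, a < t < r -> is_derive f t (df t)) ->
  left_lim f r A -> left_lim df r d -> left_lim (fun t => (f t - A) / (t - r)) r d.
Proof.
  intros ha Hd HfA Hdf eps He.
  destruct (Hdf (eps / 2) ltac:(lra)) as [d1 [H1 H1']].
  exists (Rmin d1 (r - a)). split; [apply Rmin_pos; lra|].
  intros t Ht. assert (Rmin d1 (r - a) <= d1) by apply Rmin_l.
  assert (Rmin d1 (r - a) <= r - a) by apply Rmin_r.
  (* the mean value estimate on [[t, s]], in the limit [s -> r] *)
  assert (Key : 0 <= eps / 2 * (r - t) - Rabs (A - f t - d * (r - t))).
  { apply (left_lim_ge (fun s => eps / 2 * (s - t) - Rabs (f s - f t - d * (s - t))) r _ t);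
      [lra| |].
    - apply (left_lim_minus (fun s => eps / 2 * (s - t))
               (fun s => Rabs (f s - f t - d * (s - t)))).
      + apply (left_lim_mult (fun _ => eps / 2) (fun s => s - t));
          [apply left_lim_const| apply left_lim_minus; [apply left_lim_id| apply left_lim_const]].
      + apply (left_lim_comp (fun s => f s - f t - d * (s - t)) Rabs); [|apply Rcontinuity_abs].
        apply left_lim_minus; [apply left_lim_minus; [exact HfA| apply left_lim_const]|].
        apply (left_lim_mult (fun _ => d) (fun s => s - t));
          [apply left_lim_const| apply left_lim_minus; [apply left_lim_id| apply left_lim_const]].
    - intros s Hs.
      assert (Hder : forall x, t < x < s -> is_derive f x (df x)) by (intros x Hx; apply Hd; lra).
      assert (Hc : forall x, t <= x <= s -> continuity_pt f x)
        by (intros x Hx; eapply continuity_pt_of_is_derive, Hd; lra).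
      assert (Hb : forall x, t <= x <= s -> d - eps / 2 <= df x <= d + eps / 2).
      { intros x Hx. specialize (H1' x ltac:(lra)). apply Rabs_def2 in H1'. lra. }
      assert (G1 := MVT_lower f df t s (d - eps / 2) ltac:(lra) Hder Hc
        ltac:(intros x Hx; apply Hb; auto)).
      assert (G2 := MVT_upper f df t s (d + eps / 2) ltac:(lra) Hder Hc
        ltac:(intros x Hx; apply Hb; auto)).
      assert (Rabs (f s - f t - d * (s - t)) <= eps / 2 * (s - t)) by (apply Rabs_le; split; nra).
      lra. }
  replace ((f t - A) / (t - r) - d) with ((A - f t - d * (r - t)) / (r - t)) by (field; lra).
  unfold Rdiv. rewrite Rabs_mult, (Rabs_right (/ (r - t))) by (left; apply Rinv_0_lt_compat; lra).
  apply (Rmult_lt_reg_r (r - t)); [lra|]. rewrite Rmult_assoc, Rinv_l by lra. nra.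
Qed.

Definition glue_at (r : R) (f1 f2 : R -> R) t := if Rlt_dec t r then f1 t else f2 t.

Lemma is_derive_glue_at (f1 f2 : R -> R) r d :
  left_lim (fun t => (f1 t - f2 r) / (t - r)) r d -> is_derive f2 r d ->
  is_derive (glue_at r f1 f2) r d.
Proof.
  intros HL Hd. apply is_derive_Reals. apply is_derive_Reals in Hd.
  intros eps He. destruct (HL eps He) as [d1 [H1 H1']]. destruct (Hd eps He) as [d2 Hd2].
  assert (Hp : 0 < Rmin d1 d2) by (apply Rmin_pos; [lra| apply cond_pos]).
  exists (mkposreal _ Hp). intros hh Hh0 Hh. simpl in Hh.
  assert (Rmin d1 d2 <= d1) by apply Rmin_l. assert (Rmin d1 d2 <= d2) by apply Rmin_r.
  unfold glue_at. destruct (Rlt_dec r r) as [h|h]; [lra|].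
  destruct (Rlt_dec (r + hh) r) as [h1|h1].
  - apply Rabs_def2 in Hh. specialize (H1' (r + hh) ltac:(lra)).
    replace (r + hh - r) with hh in H1' by ring. exact H1'.
  - apply Hd2; auto. lra.
Qed.

Lemma glue_at_lt r f1 f2 t : t < r -> glue_at r f1 f2 t = f1 t.
Proof. intros h. unfold glue_at. destruct Rlt_dec; [auto| lra]. Qed.

Lemma glue_at_ge r f1 f2 t : r <= t -> glue_at r f1 f2 t = f2 t.
Proof. intros h. unfold glue_at. destruct Rlt_dec; [lra| auto]. Qed.

Lemma ode_rhs_glue_at_lt p r phi dphi f g t : t < r ->
  ode_rhs p (glue_at r phi f) (glue_at r dphi g) t = ode_rhs p phi dphi t.
Proof. intros h. unfold ode_rhs. rewrite !glue_at_lt by exact h. reflexivity. Qed.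

Lemma ode_rhs_glue_at_ge p r phi dphi f g t : r <= t ->
  ode_rhs p (glue_at r phi f) (glue_at r dphi g) t = ode_rhs p f g t.
Proof. intros h. unfold ode_rhs. rewrite !glue_at_ge by exact h. reflexivity. Qed.

Lemma right_deriv_ext_loc f g l r : 0 < r -> (forall y, 0 <= y < r -> f y = g y) ->
  right_deriv f 0 l -> right_deriv g 0 l.
Proof.
  intros hr He H. unfold right_deriv in *.
  apply (filterlim_ext_loc (fun y => (f y - f 0) / (y - 0))); [|exact H].
  exists (mkposreal r hr). intros y Hy Hpos.
  change (Rabs (y - 0) < r) in Hy. rewrite Rminus_0_r in Hy. apply Rabs_def2 in Hy.
  rewrite !He by lra. reflexivity.
Qed.

Lemma is_derive_glue_at_lt (f1 f2 : R -> R) r y l : y < r -> is_derive f1 y l ->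
  is_derive (glue_at r f1 f2) y l.
Proof.
  intros h H. apply (is_derive_ext_loc f1); [|exact H].
  apply locally_of_Rabs with (r - y); [lra|]. intros t Ht. apply Rabs_def2 in Ht.
  rewrite glue_at_lt by lra. reflexivity.
Qed.

Lemma is_derive_glue_at_gt (f1 f2 : R -> R) r y l : r < y -> is_derive f2 y l ->
  is_derive (glue_at r f1 f2) y l.
Proof.
  intros h H. apply (is_derive_ext_loc f2); [|exact H].
  apply locally_of_Rabs with (y - r); [lra|]. intros t Ht. apply Rabs_def2 in Ht.
  rewrite glue_at_ge by lra. reflexivity.
Qed.

Lemma left_lim_ode_rhs p r phi dphi A B : 1 <= p ->
  left_lim phi r A -> left_lim dphi r B ->
  left_lim (ode_rhs p phi dphi) r (/ 2 * r * B - gam p * A - abspow B p).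
Proof.
  intros hp HA HB. unfold ode_rhs.
  apply left_lim_minus; [apply left_lim_minus|].
  - apply (left_lim_mult (fun t => / 2 * t) dphi); [|exact HB].
    apply (left_lim_mult (fun _ => / 2) (fun t => t)); [apply left_lim_const| apply left_lim_id].
  - apply (left_lim_mult (fun _ => gam p) phi); [apply left_lim_const| exact HA].
  - apply (left_lim_comp dphi (fun u => abspow u p)); [exact HB| apply continuity_pt_abspow, hp].
Qed.

Lemma is_sol_glue_at p al r rho phi dphi f g A B : 1 <= p -> 0 < rho ->
  is_sol p al (Finite r) phi dphi -> left_lim phi r A -> left_lim dphi r B ->
  f r = A -> g r = B ->
  (forall t, Rabs (t - r) < rho -> is_derive f t (g t) /\ is_derive g t (ode_rhs p f g t)) ->
  is_sol p al (Finite (r + rho)) (glue_at r phi f) (glue_at r dphi g).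
Proof.
  intros hp hrho (Hr & H0 & H1 & Hrd0 & Hrd1 & Hd) HA HB Hf Hg Hfg. simpl in Hr.
  assert (Hd' : forall t, 0 < t < r ->
    is_derive phi t (dphi t) /\ is_derive dphi t (ode_rhs p phi dphi t))
    by (intros t Ht; apply Hd; simpl; lra).
  split; [simpl; lra|].
  rewrite (glue_at_lt r phi f 0 Hr), (glue_at_lt r dphi g 0 Hr),
    (ode_rhs_glue_at_lt p r phi dphi f g 0 Hr).
  split; [exact H0|]. split; [exact H1|].
  split; [apply (right_deriv_ext_loc phi _ _ r Hr); auto; intros; symmetry; apply glue_at_lt; lra|].
  split; [apply (right_deriv_ext_loc dphi _ _ r Hr); auto; intros; symmetry; apply glue_at_lt; lra|].
  intros y Hy HyR. simpl in HyR.
  destruct (Rtotal_order y r) as [h|[->|h]].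
  - destruct (Hd' y ltac:(lra)) as [D1 D2].
    rewrite glue_at_lt, ode_rhs_glue_at_lt by exact h.
    split; apply is_derive_glue_at_lt; auto.
  - destruct (Hfg r ltac:(rewrite Rminus_eq_0, Rabs_R0; lra)) as [D1 D2].
    rewrite glue_at_ge, ode_rhs_glue_at_ge by lra.
    split; apply is_derive_glue_at.
    + rewrite Hf, Hg. apply (left_lim_diff_quotient phi dphi 0 r A B Hr); auto.
      intros t Ht; apply Hd'; lra.
    + exact D1.
    + unfold ode_rhs at 1. rewrite Hf, Hg.
      apply (left_lim_diff_quotient dphi (ode_rhs p phi dphi) 0 r B); auto.
      * intros t Ht; apply Hd'; lra.
      * apply left_lim_ode_rhs; auto.
    + exact D2.
  - destruct (Hfg y ltac:(rewrite Rabs_right; lra)) as [D1 D2].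
    rewrite glue_at_ge, ode_rhs_glue_at_ge by lra.
    split; apply is_derive_glue_at_gt; auto.
Qed.

(** * Solutions with small initial slope *)

(* Extending by the constant [f 0] to the left of [0] turns one-sided regularity at [0]
   into the two-sided continuity required by the mean value theorem. *)
Definition ext0 (f : R -> R) t := f (Rmax 0 t).

Lemma ext0_of_nonneg f t : 0 <= t -> ext0 f t = f t.
Proof. intros h. unfold ext0. rewrite Rmax_right; auto. Qed.

Lemma ode_rhs_ext0 p phi dphi t : 0 <= t ->
  ode_rhs p (ext0 phi) (ext0 dphi) t = ode_rhs p phi dphi t.
Proof. intros h. unfold ode_rhs. rewrite !ext0_of_nonneg; auto. Qed.

Lemma is_derive_ext0 f t l : 0 < t -> is_derive f t l -> is_derive (ext0 f) t l.
Proof.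
  intros h H. apply (is_derive_ext_loc f); [|exact H].
  apply locally_of_Rabs with t; [exact h|]. intros y Hy. apply Rabs_def2 in Hy.
  rewrite ext0_of_nonneg by lra. reflexivity.
Qed.

Lemma continuity_pt_ext0_of_right_deriv f l : right_deriv f 0 l -> continuity_pt (ext0 f) 0.
Proof.
  intros H. destruct (proj1 (filterlim_locally _ _) H (mkposreal 1 Rlt_0_1)) as [d Hd].
  assert (Hl : 0 < Rabs l + 1) by (assert (0 <= Rabs l) by apply Rabs_pos; lra).
  assert (Hb : forall y, 0 < y < d -> Rabs (f y - f 0) <= (Rabs l + 1) * y).
  { intros y Hy. assert (Q : ball l 1 ((f y - f 0) / (y - 0))).
    { apply Hd; [| lra]. change (Rabs (y - 0) < d). rewrite Rminus_0_r, Rabs_right; lra. }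
    change (Rabs ((f y - f 0) / (y - 0) - l) < 1) in Q. rewrite Rminus_0_r in Q.
    replace (f y - f 0) with ((f y - f 0) / y * y) by (field; lra).
    rewrite Rabs_mult, (Rabs_right y) by lra. apply Rmult_le_compat_r; [lra|].
    assert (Rabs ((f y - f 0) / y) - Rabs l <= Rabs ((f y - f 0) / y - l))
      by apply Rabs_triang_inv. lra. }
  apply continuity_pt_of_eps. intros eps He.
  exists (Rmin d (eps / (Rabs l + 1))).
  split; [apply Rmin_pos; [apply cond_pos| apply Rdiv_lt_0_compat; lra]|].
  intros y Hy. unfold ext0. rewrite (Rmax_left 0 0) by lra.
  destruct (Rle_dec y 0) as [h|h].
  - rewrite Rmax_left, Rminus_eq_0, Rabs_R0 by lra. lra.
  - rewrite Rmax_right by lra. rewrite Rminus_0_r, Rabs_right in Hy by lra.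
    assert (y < d) by (eapply Rlt_le_trans; [apply Hy| apply Rmin_l]).
    assert (y < eps / (Rabs l + 1)) by (eapply Rlt_le_trans; [apply Hy| apply Rmin_r]).
    apply Rlt_div_r in H1; [|lra]. specialize (Hb y ltac:(lra)). lra.
Qed.

Lemma is_derive_ode_rhs p (P V : R -> R) t : 1 < p ->
  is_derive P t (V t) -> is_derive V t (ode_rhs p P V t) -> 0 < V t ->
  is_derive (ode_rhs p P V) t
    (/ (2 * (p - 1)) * V t + (t / 2 - p * Rpower (V t) (p - 1)) * ode_rhs p P V t).
Proof.
  intros hp HP HV Hpos. set (Z0 := ode_rhs p P V t) in *.
  assert (HC := is_derive_comp (fun u => abspow u p) V t _ _ (is_derive_abspow (V t) p Hpos) HV).
  apply is_derive_Reals in HP, HV, HC. apply is_derive_Reals.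
  evar (d : R).
  assert (derivable_pt_lim (fun t => / 2 * t * V t - gam p * P t - abspow (V t) p) t d).
  { apply (derivable_pt_lim_minus (fun t => / 2 * t * V t - gam p * P t) (fun t => abspow (V t) p));
      [|exact HC].
    apply (derivable_pt_lim_minus (fun t => / 2 * t * V t) (fun t => gam p * P t));
      [|apply (derivable_pt_lim_scal P), HP].
    apply (derivable_pt_lim_mult (fun t => / 2 * t) V); [|exact HV].
    apply (derivable_pt_lim_scal id), derivable_pt_lim_id. }
  subst d. unfold scal in H. simpl in H. unfold mult in H; simpl in H.
  replace (/ (2 * (p - 1))) with (/ 2 - gam p) by (unfold gam; field; lra).
  replace ((/ 2 - gam p) * V t + (t / 2 - p * Rpower (V t) (p - 1)) * Z0) with
    (/ 2 * 1 * V t + / 2 * t * Z0 - gam p * V t - Z0 * (p * Rpower (V t) (p - 1))) by field.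
  exact H.
Qed.

Lemma Rbar_lt_of_le_lt (t x : R) (Rm : Rbar) : t <= x -> Rbar_lt x Rm -> Rbar_lt t Rm.
Proof. destruct Rm; simpl; auto; lra. Qed.

Lemma is_derive_mult_exp (W : R -> R) w C u : is_derive W u w ->
  is_derive (fun t => W t * exp (- C * t)) u ((w - C * W u) * exp (- C * u)).
Proof.
  intros HW.
  assert (HE : is_derive (fun t => exp (- C * t)) u (- C * exp (- C * u)))
    by (auto_derive; auto; ring).
  assert (G := is_derive_mult W (fun t => exp (- C * t)) u _ _ HW HE
    ltac:(intros; apply Rmult_comm)).
  unfold mult, plus in G; simpl in G.
  replace ((w - C * W u) * exp (- C * u)) with (w * exp (- C * u) + W u * (- C * exp (- C * u)))
    by ring.
  exact G.
Qed.

Section SmallSlope.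

Variables (p al : R) (Rm : Rbar) (phi dphi : R -> R).

Hypothesis p_gt_1 : 1 < p.
Hypothesis al_gt_0 : 0 < al.
Hypothesis sol : is_sol p al Rm phi dphi.

Local Notation P := (ext0 phi).
Local Notation V := (ext0 dphi).
Local Notation Z := (ode_rhs p (ext0 phi) (ext0 dphi)).
Local Notation c := (/ (2 * (p - 1))).
Local Notation K := (Rpower al (p - 1)).

Lemma c_gt_0 : 0 < c.
Proof. apply Rinv_0_lt_compat. lra. Qed.

Lemma sol_at_0 : P 0 = 0 /\ V 0 = al /\ Z 0 = - (al * K).
Proof.
  destruct sol as (_ & H0 & H1 & _).
  rewrite ode_rhs_ext0, !ext0_of_nonneg by lra. rewrite H0, H1.
  split; [reflexivity|]. split; [reflexivity|].
  unfold ode_rhs. rewrite H0, H1, abspow_of_pos by exact al_gt_0.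
  replace (Rpower al p) with (Rpower al (1 + (p - 1))) by (f_equal; ring).
  rewrite Rpower_plus, Rpower_1 by lra. ring.
Qed.

Lemma sol_derive t : 0 < t -> Rbar_lt t Rm -> is_derive P t (V t) /\ is_derive V t (Z t).
Proof.
  intros Ht HtR. destruct sol as (_ & _ & _ & _ & _ & Hd). destruct (Hd t Ht HtR) as [H1 H2].
  rewrite ode_rhs_ext0, ext0_of_nonneg by lra.
  split; apply is_derive_ext0; auto.
Qed.

Lemma sol_cont t : 0 <= t -> Rbar_lt t Rm ->
  continuity_pt P t /\ continuity_pt V t /\ continuity_pt Z t.
Proof.
  intros Ht HtR.
  assert (HPV : continuity_pt P t /\ continuity_pt V t).
  { destruct (Req_dec t 0) as [->|Hne].
    - destruct sol as (_ & _ & _ & H1 & H2 & _).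
      split; eapply continuity_pt_ext0_of_right_deriv; eauto.
    - destruct (sol_derive t ltac:(lra) HtR) as [D1 D2].
      split; eapply continuity_pt_of_is_derive; eauto. }
  destruct HPV as [HP HV]. split; [exact HP|]. split; [exact HV|].
  unfold ode_rhs. repeat apply continuity_pt_minus; repeat apply continuity_pt_mult;
    try apply continuity_pt_cst; try apply continuity_pt_id; auto.
  apply (continuity_pt_comp V (fun u => abspow u p)); [exact HV|].
  apply continuity_pt_abspow. lra.
Qed.

Lemma rhs_derive t : 0 < t -> Rbar_lt t Rm -> 0 < V t ->
  is_derive Z t (c * V t + (t / 2 - p * Rpower (V t) (p - 1)) * Z t).
Proof.
  intros Ht HtR Hv. destruct (sol_derive t Ht HtR). apply is_derive_ode_rhs; auto.
Qed.

Lemma V_increment_ge a t m : 0 <= a <= t -> Rbar_lt t Rm ->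
  (forall y, a <= y <= t -> m <= Z y) -> V a + m * (t - a) <= V t.
Proof.
  intros Ht HtR Hm. apply (MVT_lower V Z a t m); [lra| | |exact Hm]; intros y Hy.
  - apply sol_derive; [lra| apply Rbar_lt_of_le_lt with t; [lra| exact HtR]].
  - apply sol_cont; [lra| apply Rbar_lt_of_le_lt with t; [lra| exact HtR]].
Qed.

Lemma P_increment_ge a t m : 0 <= a <= t -> Rbar_lt t Rm ->
  (forall y, a <= y <= t -> m <= V y) -> P a + m * (t - a) <= P t.
Proof.
  intros Ht HtR Hm. apply (MVT_lower P V a t m); [lra| | |exact Hm]; intros y Hy.
  - apply sol_derive; [lra| apply Rbar_lt_of_le_lt with t; [lra| exact HtR]].
  - apply sol_cont; [lra| apply Rbar_lt_of_le_lt with t; [lra| exact HtR]].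
Qed.

Lemma convex_after_zero s : 0 < s -> Rbar_lt s Rm -> Z s = 0 -> 0 < V s ->
  forall t, s < t -> Rbar_lt t Rm -> 0 < Z t /\ V s <= V t.
Proof.
  intros Hs HsR Hz Hv.
  assert (Hc := c_gt_0).
  assert (Hrange : forall t y, s <= y <= t -> Rbar_lt t Rm -> 0 < y /\ Rbar_lt y Rm)
    by (intros t y Hy HtR; split; [lra| apply Rbar_lt_of_le_lt with t; [lra| exact HtR]]).
  assert (V_incr : forall t, s <= t -> Rbar_lt t Rm -> (forall y, s <= y <= t -> 0 <= Z y) ->
    V s <= V t).
  { intros t Ht HtR HZ. assert (G := V_increment_ge s t 0 ltac:(lra) HtR HZ). lra. }
  assert (D := rhs_derive s Hs HsR Hv). rewrite Hz, Rmult_0_r, Rplus_0_r in D.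
  apply is_derive_Reals in D.
  destruct (derivable_pt_lim_pos_right_gt Z s _ D ltac:(apply Rmult_lt_0_compat; lra))
    as [d [Hd Hd']].
  rewrite Hz in Hd'.
  assert (Pos : forall t, s < t -> Rbar_lt t Rm -> 0 < Z t).
  { intros t Ht HtR. destruct (Rlt_le_dec 0 (Z t)) as [h|h]; auto. exfalso.
    set (a := s + Rmin d (t - s) / 2).
    assert (Ha : s < a < s + d /\ a < t) by (unfold a, Rmin; destruct Rle_dec; lra).
    destruct (first_crossing Z a t 0) as [s' [Hs1 [Hs2 Hs3]]]; try lra.
    { intros y Hy. apply sol_cont; [lra| apply (Hrange t y); [lra| exact HtR]]. }
    { apply Hd'; lra. }
    assert (Hs'R : Rbar_lt s' Rm) by (apply (Hrange t s'); [lra| exact HtR]).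
    assert (Vs' : V s <= V s').
    { apply V_incr; [lra| exact Hs'R|]. intros y Hy.
      destruct (Req_dec y s) as [->|]; [lra|]. destruct (Req_dec y s') as [->|]; [lra|].
      destruct (Rlt_le_dec y a); left; [apply Hd'| apply Hs3]; lra. }
    assert (D' := rhs_derive s' ltac:(lra) Hs'R ltac:(lra)).
    rewrite Hs2, Rmult_0_r, Rplus_0_r in D'. apply is_derive_Reals in D'.
    assert (Dn := derivable_pt_lim_nonpos_of_left_gt Z s' _ a D' ltac:(lra)
      ltac:(intros y Hy; rewrite Hs2; apply Hs3; lra)).
    assert (0 < c * V s') by (apply Rmult_lt_0_compat; lra). lra. }
  intros t Ht HtR. split; [apply Pos; auto|].
  apply V_incr; [lra| exact HtR|]. intros y Hy.
  destruct (Req_dec y s) as [->|]; [lra|]. left; apply Pos; [lra| apply (Hrange t y); auto].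
Qed.


Hypothesis K_le_quarter : K <= / 4.
Hypothesis K_le_c_div_8 : K <= c / 8.

Lemma rhs_slope_ge y v z : 0 <= y <= 1 -> al / 2 <= v -> - 2 * (al * K) <= z <= 0 ->
  c * al / 4 <= c * v + (y / 2 - p * Rpower v (p - 1)) * z.
Proof.
  intros Hy Hv Hz. assert (Hc := c_gt_0).
  assert (0 < Rpower v (p - 1)) by apply Rpower_gt_0.
  assert (0 <= p * Rpower v (p - 1) * - z) by (apply Rmult_le_pos; nra).
  assert (c * (al / 2) <= c * v) by (apply Rmult_le_compat_l; lra).
  assert (y / 2 * z >= - (al * K)) by nra.
  assert (al * K <= al * (c / 8)) by (apply Rmult_le_compat_l; lra).
  nra.
Qed.

Lemma V_ge_half_of_rhs_ge s : 0 <= s <= 1 -> Rbar_lt s Rm ->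
  (forall y, 0 <= y <= s -> - 2 * (al * K) <= Z y) -> al / 2 <= V s.
Proof.
  intros Hs HsR HZ. assert (G := V_increment_ge 0 s _ ltac:(lra) HsR HZ).
  destruct sol_at_0 as [_ [HV0 _]]. rewrite HV0 in G.
  assert (0 < K) by apply Rpower_gt_0. assert (K * s <= / 4) by nra.
  assert (al * (K * s) <= al / 4) by (apply Rmult_le_compat_l; lra). nra.
Qed.

Lemma concave_phase x : 0 <= x <= 1 -> Rbar_lt x Rm -> (forall t, 0 <= t <= x -> Z t < 0) ->
  forall t, 0 <= t <= x -> al / 2 <= V t /\ - (al * K) + c * al / 4 * t <= Z t.
Proof.
  intros Hx HxR Hneg.
  destruct sol_at_0 as (HP0 & HV0 & HZ0).
  assert (HR : forall t, 0 <= t <= x -> Rbar_lt t Rm)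
    by (intros t Ht; apply Rbar_lt_of_le_lt with x; [lra| exact HxR]).
  assert (HalK : 0 < al * K) by (assert (0 < K) by apply Rpower_gt_0; nra).
  assert (Z_gt : forall t, 0 <= t <= x -> - 2 * (al * K) < Z t).
  { intros t Ht. destruct (Rlt_le_dec (- 2 * (al * K)) (Z t)) as [h|h]; auto. exfalso.
    assert (Ht0 : 0 < t) by (destruct (Req_dec t 0) as [->|]; [rewrite HZ0 in h|]; lra).
    destruct (first_crossing Z 0 t (- 2 * (al * K))) as [s [Hs1 [Hs2 Hs3]]]; auto.
    { intros y Hy. apply sol_cont; [lra| apply HR; lra]. }
    { rewrite HZ0; lra. }
    assert (Vs : al / 2 <= V s).
    { apply V_ge_half_of_rhs_ge; [lra| apply HR; lra|]. intros y Hy.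
      destruct (Req_dec y s) as [->|]; [lra| left; apply Hs3; lra]. }
    assert (D := rhs_derive s ltac:(lra) ltac:(apply HR; lra) ltac:(lra)).
    apply is_derive_Reals in D.
    assert (Dn := derivable_pt_lim_nonpos_of_left_gt Z s _ 0 D ltac:(lra)
      ltac:(intros y Hy; rewrite Hs2; apply Hs3; lra)).
    assert (Hsl := rhs_slope_ge s (V s) (Z s) ltac:(lra) Vs ltac:(lra)).
    assert (0 < c) by apply c_gt_0. nra. }
  assert (V_ge : forall t, 0 <= t <= x -> al / 2 <= V t).
  { intros t Ht. apply V_ge_half_of_rhs_ge; [lra| apply HR; lra|].
    intros y Hy. left. apply Z_gt. lra. }
  intros t Ht. split; [apply V_ge, Ht|].
  assert (G := MVT_lower Z (fun u => c * V u + (u / 2 - p * Rpower (V u) (p - 1)) * Z u)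
    0 t (c * al / 4) ltac:(lra)
    ltac:(intros y Hy; apply rhs_derive;
            [lra| apply HR; lra| assert (al / 2 <= V y) by (apply V_ge; lra); lra])
    ltac:(intros y Hy; apply sol_cont; [lra| apply HR; lra])
    ltac:(intros y Hy; apply rhs_slope_ge;
            [lra| apply V_ge; lra| split; [left; apply Z_gt| left; apply Hneg]; lra])).
  rewrite HZ0 in G. lra.
Qed.


Lemma concave_time_bound : 0 < 8 * K / c <= 1.
Proof.
  assert (Hc := c_gt_0). assert (0 < K) by apply Rpower_gt_0.
  split; [apply Rdiv_lt_0_compat; lra|].
  apply (Rmult_le_reg_r c); [exact Hc|]. unfold Rdiv. rewrite Rmult_assoc, Rinv_l by lra. lra.
Qed.

Lemma concave_region_short x : 0 <= x -> Rbar_lt x Rm ->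
  (forall t, 0 <= t <= x -> Z t < 0) -> x < 8 * K / c.
Proof.
  intros Hx HxR Hneg. assert (Hc := c_gt_0).
  assert (HalK : 0 < al * K) by (assert (0 < K) by apply Rpower_gt_0; nra).
  assert (Hxs := concave_time_bound).
  destruct (Rlt_le_dec x (8 * K / c)) as [h|h]; [exact h|]. exfalso.
  destruct (concave_phase (8 * K / c) ltac:(lra)
    ltac:(apply Rbar_lt_of_le_lt with x; [lra| exact HxR])
    ltac:(intros t Ht; apply Hneg; lra) (8 * K / c) ltac:(lra)) as [_ G].
  specialize (Hneg (8 * K / c) ltac:(lra)).
  replace (c * al / 4 * (8 * K / c)) with (2 * (al * K)) in G by (field; lra). lra.
Qed.

Lemma rhs_sign_change t0 : 0 <= t0 -> Rbar_lt t0 Rm -> 0 <= Z t0 ->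
  exists Rb, 0 < Rb <= t0 /\ Rb <= 1 /\
    (forall t, 0 <= t < Rb -> Z t < 0) /\ Z Rb = 0 /\ al / 2 <= V Rb.
Proof.
  intros Ht0 Ht0R Hz0. destruct sol_at_0 as (_ & _ & HZ0).
  assert (HalK : 0 < al * K) by (assert (0 < K) by apply Rpower_gt_0; nra).
  assert (Hc := c_gt_0).
  assert (HR : forall y, 0 <= y <= t0 -> Rbar_lt y Rm)
    by (intros y Hy; apply Rbar_lt_of_le_lt with t0; [lra| exact Ht0R]).
  assert (Ht0p : 0 < t0) by (destruct (Req_dec t0 0) as [->|]; lra).
  destruct (first_crossing (fun u => - Z u) 0 t0 0) as [Rb [Hb1 [Hb2 Hb3]]]; [lra| | lra| lra|].
  { intros y Hy. apply continuity_pt_opp, sol_cont; [lra| apply HR; lra]. }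
  assert (Hneg : forall t, 0 <= t < Rb -> Z t < 0) by (intros t Ht; specialize (Hb3 t Ht); lra).
  assert (Hshort : forall x, 0 <= x < Rb -> x < 8 * K / c)
    by (intros x Hx; apply concave_region_short; [lra| apply HR; lra| intros; apply Hneg; lra]).
  assert (Hxs := concave_time_bound).
  assert (Hb_le : Rb <= 8 * K / c).
  { destruct (Rle_lt_dec Rb (8 * K / c)) as [h|h]; [exact h|].
    specialize (Hshort (8 * K / c) ltac:(lra)). lra. }
  exists Rb. split; [lra|]. split; [lra|]. split; [exact Hneg|]. split; [lra|].
  apply V_ge_half_of_rhs_ge; [lra| apply HR; lra|]. intros y Hy.
  destruct (Req_dec y Rb) as [->|]; [lra|].
  destruct (concave_phase y ltac:(lra) ltac:(apply HR; lra)
    ltac:(intros t Ht; apply Hneg; lra) y ltac:(lra)) as [_ G].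
  assert (0 <= c * al / 4 * y) by (apply Rmult_le_pos; [|lra]; nra). lra.
Qed.

Lemma V_ge_half t : 0 <= t -> Rbar_lt t Rm -> al / 2 <= V t.
Proof.
  intros Ht HtR.
  destruct (classic (exists t0, 0 <= t0 <= t /\ 0 <= Z t0)) as [[t0 [Ht0 Hz0]]|Hnone].
  - destruct (rhs_sign_change t0 ltac:(lra) ltac:(apply Rbar_lt_of_le_lt with t; [lra| exact HtR])
      Hz0) as [Rb [HRb [HRb1 [Hneg [HzRb HVRb]]]]].
    destruct (Rtotal_order t Rb) as [h|[->|h]]; [| exact HVRb |].
    + apply (concave_phase t ltac:(lra) HtR ltac:(intros y Hy; apply Hneg; lra) t ltac:(lra)).
    + destruct (convex_after_zero Rb ltac:(lra)
        ltac:(apply Rbar_lt_of_le_lt with t; [lra| exact HtR])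
        HzRb ltac:(lra) t h HtR). lra.
  - assert (Hneg : forall y, 0 <= y <= t -> Z y < 0).
    { intros y Hy. destruct (Rlt_le_dec (Z y) 0) as [h|h]; [exact h|].
      exfalso. apply Hnone. exists y. auto. }
    assert (Hshort := concave_region_short t Ht HtR Hneg).
    assert (Hxs := concave_time_bound).
    apply (concave_phase t ltac:(lra) HtR Hneg t ltac:(lra)).
Qed.

Lemma P_ge t : 0 <= t -> Rbar_lt t Rm -> al / 2 * t <= P t.
Proof.
  intros Ht HtR. destruct sol_at_0 as [HP0 _].
  assert (G := P_increment_ge 0 t (al / 2) ltac:(lra) HtR
    ltac:(intros y Hy; apply V_ge_half; [lra| apply Rbar_lt_of_le_lt with t; [lra| exact HtR]])).
  rewrite HP0 in G. lra.
Qed.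

Lemma sol_growth_bound r : Rm = Finite r -> forall t, 0 <= t < r ->
  V t + P t <= al * exp ((r / 2 + 1 + Rabs (gam p)) * r).
Proof.
  intros HRm t Ht. set (C := r / 2 + 1 + Rabs (gam p)).
  assert (HC0 : 0 <= Rabs (gam p)) by apply Rabs_pos.
  assert (HR : forall y, 0 <= y <= t -> Rbar_lt y Rm) by (intros y Hy; rewrite HRm; simpl; lra).
  assert (HV : forall y, 0 <= y <= t -> al / 2 <= V y)
    by (intros y Hy; apply V_ge_half; [lra| apply HR; lra]).
  assert (HP : forall y, 0 <= y <= t -> 0 <= P y)
    by (intros y Hy; assert (G := P_ge y ltac:(lra) ltac:(apply HR; lra)); nra).
  assert (Hslope : forall y, 0 <= y <= t -> Z y + V y - C * (V y + P y) <= 0).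
  { intros y Hy. specialize (HV y Hy). specialize (HP y Hy). unfold ode_rhs.
    assert (0 <= abspow (V y) p) by apply abspow_ge_0.
    assert (- gam p * P y <= Rabs (gam p) * P y)
      by (assert (- gam p <= Rabs (gam p)) by (rewrite <- Rabs_Ropp; apply Rle_abs); nra).
    assert (y / 2 * V y <= r / 2 * V y) by nra.
    unfold C. nra. }
  assert (G := MVT_upper (fun u => (V u + P u) * exp (- C * u))
    (fun u => (Z u + V u - C * (V u + P u)) * exp (- C * u)) 0 t 0 ltac:(lra)).
  destruct sol_at_0 as (HP0 & HV0 & _).
  simpl in G. rewrite HV0, HP0, Rmult_0_r, exp_0 in G.
  assert (Hexp : 0 < exp (- C * t)) by apply exp_pos.
  assert (HW : (V t + P t) * exp (- C * t) <= al).
  { enough ((V t + P t) * exp (- C * t) <= (al + 0) * 1 + 0 * (t - 0)) by lra. apply G.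
    - intros y Hy. destruct (sol_derive y ltac:(lra) ltac:(apply HR; lra)) as [D1 D2].
      apply (is_derive_mult_exp (fun u => V u + P u)), (is_derive_plus V P y (Z y) (V y) D2 D1).
    - intros y Hy. destruct (sol_cont y ltac:(lra) ltac:(apply HR; lra)) as (C1 & C2 & _).
      apply continuity_pt_mult; [apply continuity_pt_plus; auto|].
      apply (continuity_pt_of_is_derive _ y (- C * exp (- C * y))). auto_derive; auto; ring.
    - intros y Hy. assert (0 < exp (- C * y)) by apply exp_pos.
      specialize (Hslope y Hy). nra. }
  assert (exp (C * t) * exp (- C * t) = 1)
    by (rewrite <- exp_plus; replace (C * t + - C * t) with 0 by ring; apply exp_0).
  assert (exp (C * t) <= exp (C * r)).
  { destruct (Req_dec t r) as [->|]; [lra|]. left. apply exp_increasing. unfold C. nra. }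
  assert (V t + P t <= al * exp (C * t)) by (assert (0 < exp (C * t)) by apply exp_pos; nra).
  nra.
Qed.

Lemma sol_bounded_of_finite r : Rm = Finite r ->
  exists W M, 0 <= M /\ forall t, 0 <= t < r ->
    0 <= P t <= W /\ al / 2 <= V t <= W /\ - M <= Z t.
Proof.
  intros HRm.
  assert (HR : forall t, 0 <= t < r -> Rbar_lt t Rm) by (intros t Ht; rewrite HRm; simpl; lra).
  set (W := al * exp ((r / 2 + 1 + Rabs (gam p)) * r)).
  assert (HW := sol_growth_bound r HRm). fold W in HW.
  assert (HV : forall t, 0 <= t < r -> al / 2 <= V t)
    by (intros t Ht; apply V_ge_half; [lra| apply HR, Ht]).
  assert (HP : forall t, 0 <= t < r -> 0 <= P t)
    by (intros t Ht; assert (G := P_ge t ltac:(lra) (HR t Ht)); nra).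
  assert (HW0 : 0 < W)
    by (unfold W; assert (0 < exp ((r / 2 + 1 + Rabs (gam p)) * r)) by apply exp_pos; nra).
  assert (0 <= Rabs (gam p)) by apply Rabs_pos. assert (gam p <= Rabs (gam p)) by apply Rle_abs.
  exists W, (Rabs (gam p) * W + Rpower W p).
  split; [assert (0 < Rpower W p) by apply Rpower_gt_0; nra|].
  intros t Ht. specialize (HW t Ht). specialize (HV t Ht). specialize (HP t Ht).
  split; [lra|]. split; [lra|].
  unfold ode_rhs. rewrite abspow_of_pos by lra.
  assert (Rpower (V t) p <= Rpower W p) by (apply Rle_Rpower_l; lra).
  assert (- gam p * P t >= - (Rabs (gam p) * W)) by nra.
  assert (0 <= / 2 * t * V t) by nra.
  lra.
Qed.

(* [phi] is nondecreasing and [phi' + M t] is nondecreasing for a lower bound [-M] of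
   [phi''], and both are bounded on [[0, r)]. *)
Lemma sol_left_limits r : Rm = Finite r ->
  exists A B, al / 2 <= B /\ left_lim phi r A /\ left_lim dphi r B.
Proof.
  intros HRm.
  assert (Hr : 0 < r) by (destruct sol as [H0 _]; rewrite HRm in H0; exact H0).
  assert (HR : forall t, 0 <= t < r -> Rbar_lt t Rm) by (intros t Ht; rewrite HRm; simpl; lra).
  destruct (sol_bounded_of_finite r HRm) as [W [M [HM0 Hb]]].
  destruct (left_lim_of_nondecreasing P r (r / 2) W ltac:(lra)) as [A HA].
  { intros t s Ht Hs. assert (G := P_increment_ge t s 0 ltac:(lra) (HR s ltac:(lra))
      ltac:(intros y Hy; destruct (Hb y ltac:(lra)); lra)). lra. }
  { intros t Ht. apply Hb. lra. }
  destruct (left_lim_of_nondecreasing (fun t => V t + M * t) r (r / 2) (W + M * r) ltac:(lra))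
    as [B' HB'].
  { intros t s Ht Hs. assert (G := V_increment_ge t s (- M) ltac:(lra) (HR s ltac:(lra))
      ltac:(intros y Hy; apply Hb; lra)). lra. }
  { intros t Ht. destruct (Hb t ltac:(lra)) as [_ [HV _]]. assert (M * t <= M * r) by nra. lra. }
  assert (HB : left_lim V r (B' - M * r)).
  { apply (left_lim_ext (fun t => (V t + M * t) - M * t) V r _ 0 Hr); [intros; ring|].
    apply left_lim_minus; [exact HB'|].
    apply (left_lim_mult (fun _ => M) (fun t => t)); [apply left_lim_const| apply left_lim_id]. }
  exists A, (B' - M * r). split; [|split].
  - apply (left_lim_ge V r _ 0 (al / 2) Hr HB). intros t Ht. apply Hb. lra.
  - apply (left_lim_ext P phi r A 0 Hr); [intros t Ht; apply ext0_of_nonneg; lra| exact HA].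
  - apply (left_lim_ext V dphi r _ 0 Hr); [intros t Ht; apply ext0_of_nonneg; lra| exact HB].
Qed.

Lemma sol_not_max_of_finite r : Rm = Finite r -> ~ is_max_sol p al Rm phi dphi.
Proof.
  intros HRm [_ Hmax].
  assert (Hsol : is_sol p al (Finite r) phi dphi) by (rewrite <- HRm; exact sol).
  destruct (sol_left_limits r HRm) as [A [B [HB [HA HlB]]]].
  destruct (ode_local_existence p r A B p_gt_1 ltac:(lra)) as [rho [f [g [Hrho [Hf [Hg Hfg]]]]]].
  apply Hmax. exists (Finite (r + rho)), (glue_at r phi f), (glue_at r dphi g).
  split; [rewrite HRm; simpl; lra|]. split.
  - apply is_sol_glue_at with A B; auto. lra.
  - intros y Hy HyR. rewrite HRm in HyR. apply glue_at_lt, HyR.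
Qed.

Lemma rhs_changes_sign_once : Rbar_lt (8 * K / c) Rm ->
  exists Rb, 0 < Rb /\ (forall t, 0 <= t < Rb -> Z t < 0) /\
    (forall t, Rb < t -> Rbar_lt t Rm -> 0 < Z t).
Proof.
  intros HR.
  assert (Hhit : exists t0, 0 <= t0 <= 8 * K / c /\ 0 <= Z t0).
  { apply NNPP. intros Hnone.
    assert (Hneg : forall t, 0 <= t <= 8 * K / c -> Z t < 0).
    { intros t Ht. destruct (Rlt_le_dec (Z t) 0) as [h|h]; [exact h|].
      exfalso. apply Hnone. exists t. auto. }
    assert (Hxs := concave_time_bound).
    assert (H := concave_region_short (8 * K / c) ltac:(lra) HR Hneg). lra. }
  destruct Hhit as [t0 [Ht0 Hz0]].
  assert (Ht0R : Rbar_lt t0 Rm) by (apply Rbar_lt_of_le_lt with (8 * K / c); [lra| exact HR]).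
  destruct (rhs_sign_change t0 ltac:(lra) Ht0R Hz0) as [Rb [HRb [_ [Hneg [HzRb HVRb]]]]].
  exists Rb. split; [lra|]. split; [exact Hneg|].
  intros t Ht HtR. apply (convex_after_zero Rb ltac:(lra)
    ltac:(apply Rbar_lt_of_le_lt with t0; [lra| exact Ht0R]) HzRb ltac:(lra) t Ht HtR).
Qed.

End SmallSlope.

Lemma small_slope_threshold p : 1 < p ->
  exists alpha0, 0 < alpha0 /\ forall al, 0 < al -> al < alpha0 ->
    Rpower al (p - 1) <= / 4 /\ Rpower al (p - 1) <= / (2 * (p - 1)) / 8.
Proof.
  intros hp. set (k0 := Rmin (/ 4) (/ (2 * (p - 1)) / 8)).
  assert (Hk0 : 0 < k0)
    by (apply Rmin_pos; [lra| apply Rdiv_lt_0_compat; [apply Rinv_0_lt_compat|]; lra]).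
  exists (Rpower k0 (/ (p - 1))). split; [apply Rpower_gt_0|].
  intros al Hal Hal0.
  assert (HK := Rpower_lt_of_lt_root al k0 (p - 1) ltac:(lra) Hk0 Hal Hal0).
  assert (k0 <= / 4) by apply Rmin_l. assert (k0 <= / (2 * (p - 1)) / 8) by apply Rmin_r.
  lra.
Qed.

Theorem proposition7p1 (p : R) (hp : 1 < p) :
  exists alpha0 : R, 0 < alpha0 /\
  forall (alpha : R), 0 < alpha -> alpha < alpha0 ->
  forall (Rm : Rbar) (phi dphi : R -> R),
    is_max_sol p alpha Rm phi dphi ->
    Rm = p_infty /\
    (forall y, 0 < y -> 0 < phi y /\ 0 < dphi y) /\
    (exists Rbar0 : R, 0 < Rbar0 /\
       (forall y, 0 <= y -> y < Rbar0 -> ode_rhs p phi dphi y < 0) /\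
       (forall y, Rbar0 < y -> 0 < ode_rhs p phi dphi y)).
Proof.
  destruct (small_slope_threshold p hp) as [alpha0 [Halpha0 Hsmall]].
  exists alpha0. split; [exact Halpha0|].
  intros al Hal Hal0 Rm phi dphi Hmax. destruct (Hsmall al Hal Hal0) as [HK1 HK2].
  assert (Hsol := proj1 Hmax).
  assert (HRm : Rm = p_infty).
  { destruct Rm as [r| |]; [| reflexivity|].
    - exfalso. exact (sol_not_max_of_finite p al _ phi dphi hp Hal Hsol HK1 HK2 r eq_refl Hmax).
    - destruct Hsol as [H0 _]. destruct H0. }
  subst Rm. split; [reflexivity|]. split.
  - intros y Hy. rewrite <- (ext0_of_nonneg phi), <- (ext0_of_nonneg dphi) by lra.
    assert (GP := P_ge p al _ phi dphi hp Hal Hsol HK1 HK2 y ltac:(lra) I).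
    assert (GV := V_ge_half p al _ phi dphi hp Hal Hsol HK1 HK2 y ltac:(lra) I).
    split; nra.
  - destruct (rhs_changes_sign_once p al _ phi dphi hp Hal Hsol HK1 HK2 I)
      as [Rb [HRb [Hneg Hpos]]].
    exists Rb. split; [exact HRb|]. split.
    + intros y Hy1 Hy2. rewrite <- ode_rhs_ext0 by exact Hy1. apply Hneg. lra.
    + intros y Hy. rewrite <- ode_rhs_ext0 by lra. apply Hpos; [exact Hy| exact I].
Qed.
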